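(* Let $U\subset\mathbb R^n$ be open, let $X$ be a $C^\infty$ vector field on $U$ and $V:U\to\mathbb R$ a $C^\infty$ function satisfying assumptions A1, A2 and A3$'$ (stated in the context) for some $c>0$. Then every trajectory of $\dot x = X(x)-\nabla V(x)$ starting in $V^{-1}([0,c])$ stays in $V^{-1}([0,c])$ for all $t\ge0$ and converges to the set $V^{-1}(0)$ as $t\to\infty$. Moreover $V^{-1}(0)$ is an invariant set of both $\dot x=X(x)$ and $\dot x = X(x)-\nabla V(x)$.
   Context: Write $x=(x^1,\dots,x^n)$. Assumptions: (A1) $V(x)\ge0$ for all $x\in U$, $V^{-1}(0)\ne\emptyset$, and $\nabla V(x)\cdot X(x)=0$ for all $x\in U$. (A2) $c>0$ is such that $V^{-1}([0,c])$ is a compact subset of $U$. Define $X^0 g=g$, $Xg = X\cdot\nabla g$, $X^k g = X(X^{k-1}g)$ for $k\ge 2$, and $$S=\Big\{x\in U : X^k\tfrac{\partial V}{\partial x^i}(x)=0 \text{ for all } k\ge0,\ 1\le i\le n\Big\}.$$ (A3$'$) $S\cap V^{-1}([0,c])\subset V^{-1}(0)$. *)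

From Stdlib Require Import Reals List.
From mathcomp Require Import ssreflect ssrbool eqtype ssrnat seq fintype.
Set Implicit Arguments.
Open Scope R_scope.

Definition Rn (n : nat) := 'I_n -> R.

Definition rsum {n : nat} (f : 'I_n -> R) : R :=
  foldr (fun j acc => f j + acc) 0 (enum 'I_n).

Definition enorm {n : nat} (v : Rn n) : R := sqrt (rsum (fun i => v i ^ 2)).
Definition vsub {n : nat} (x y : Rn n) : Rn n := fun i => x i - y i.

Definition is_open {n : nat} (U : Rn n -> Prop) : Prop :=
  forall x, U x -> exists r, 0 < r /\ forall y, enorm (vsub y x) < r -> U y.

Definition is_compact {n : nat} (K : Rn n -> Prop) : Prop :=
  forall (J : Type) (O : J -> Rn n -> Prop),
    (forall j, is_open (O j)) ->
    (forall x, K x -> exists j, O j x) ->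
    exists l : list J, forall x, K x -> exists j, List.In j l /\ O j x.

Definition cont_on {n : nat} (U : Rn n -> Prop) (f : Rn n -> R) : Prop :=
  forall x, U x -> forall eps, 0 < eps -> exists delta, 0 < delta /\
    forall y, U y -> enorm (vsub y x) < delta -> Rabs (f y - f x) < eps.

Definition upd {n : nat} (x : Rn n) (i : 'I_n) (t : R) : Rn n :=
  fun j => if j == i then t else x j.

Definition partial {n : nat} (f : Rn n -> R) (i : 'I_n) (x : Rn n) (l : R) : Prop :=
  derivable_pt_lim (fun t => f (upd x i t)) (x i) l.

Fixpoint Ck {n : nat} (U : Rn n -> Prop) (k : nat) (f : Rn n -> R) : Prop :=
  match k with
  | O => cont_on U f
  | S k' => cont_on U f /\ forall i, exists g,
              (forall x, U x -> partial f i x (g x)) /\ Ck U k' g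
  end.

Definition smooth {n : nat} (U : Rn n -> Prop) (f : Rn n -> R) : Prop :=
  forall k, Ck U k f.

(* lie_iter U X k g h : h = X^k g on U, where X g = X . grad g. *)
Inductive lie_iter {n : nat} (U : Rn n -> Prop) (X : Rn n -> Rn n)
  : nat -> (Rn n -> R) -> (Rn n -> R) -> Prop :=
| lie0 g : lie_iter U X 0 g g
| lieS k g h (p : 'I_n -> Rn n -> R) :
    lie_iter U X k g h ->
    (forall j x, U x -> partial h j x (p j x)) ->
    lie_iter U X (S k) g (fun x => rsum (fun j => X x j * p j x)).

Definition Sset {n : nat} (U : Rn n -> Prop) (X : Rn n -> Rn n) (V : Rn n -> R)
  (x : Rn n) : Prop :=
  U x /\ forall (i : 'I_n) (g : Rn n -> R),
    (forall y, U y -> partial V i y (g y)) ->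
    forall k h, lie_iter U X k g h -> h x = 0.

Definition deriv_in (I : R -> Prop) (f : R -> R) (t l : R) : Prop :=
  forall eps, 0 < eps -> exists delta, 0 < delta /\
    forall s, I s -> s <> t -> Rabs (s - t) < delta ->
      Rabs ((f s - f t) / (s - t) - l) < eps.

Definition is_interval (I : R -> Prop) : Prop :=
  forall s t u, I s -> I u -> s <= t -> t <= u -> I t.

Definition sol {n : nat} (U : Rn n -> Prop) (F : Rn n -> Rn n)
  (I : R -> Prop) (x : R -> Rn n) : Prop :=
  forall t, I t -> U (x t) /\ forall i, deriv_in I (fun s => x s i) t (F (x t) i).

(* A is invariant: every solution on an interval through 0 starting in A stays in A
   (forward and backward in time). *)
Definition invariant_set {n : nat} (U : Rn n -> Prop) (F : Rn n -> Rn n)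
  (A : Rn n -> Prop) : Prop :=
  forall (I : R -> Prop) (x : R -> Rn n),
    is_interval I -> I 0 -> sol U F I x -> A (x 0) -> forall t, I t -> A (x t).

Definition converges_to_set {n : nat} (x : R -> Rn n) (A : Rn n -> Prop) : Prop :=
  forall eps, 0 < eps -> exists T, forall t, T <= t ->
    exists y, A y /\ enorm (vsub (x t) y) < eps.

(* Along the flow of x' = X(x) - grad V(x), assumption A1 gives d/dt V(x) = -|grad V(x)|^2, so V
   decreases and the compact sublevel set K = V^-1([0,c]) is forward invariant. Picard iteration
   gives local solutions with an existence time that is uniform on K, and they glue to solutions
   on [0, oo). Along such a solution V(x(t)) converges, so Barbalat's lemma gives grad V(x(t)) -> 0,
   and inductively X^k dV/dx^i (x(t)) -> 0, since its derivative along the flow is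
   X^(k+1) dV/dx^i (x(t)) plus a term controlled by grad V(x(t)). Every cluster point of the
   trajectory therefore lies in S /\ K, hence in V^-1(0) by A3', and compactness of K turns this
   into convergence to V^-1(0). This zero set is invariant under x' = X(x) because V is a first
   integral of X; it is invariant backwards in time under x' = X(x) - grad V(x) because Glaeser's
   inequality |grad V|^2 <= C V for the nonnegative function V turns d/dt V = -|grad V|^2 into a
   Gronwall inequality. *)

From Coquelicot Require Import Coquelicot.
From Stdlib Require Import Reals Lra Lia ZArith List.
From Stdlib Require Import FunctionalExtensionality ClassicalEpsilon Classical.
From mathcomp Require Import ssreflect ssrfun ssrbool eqtype ssrnat seq fintype.
Open Scope R_scope.
Set Implicit Arguments.

Definition lsum {n : nat} (l : seq 'I_n) (f : 'I_n -> R) : R :=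
  foldr (fun j acc => f j + acc) 0 l.

Lemma lsum_plus n (l : seq 'I_n) f g : lsum l (fun j => f j + g j) = lsum l f + lsum l g.
Proof. elim: l => /= [|a l ->]; lra. Qed.

Lemma lsum_scal n (l : seq 'I_n) c f : lsum l (fun j => c * f j) = c * lsum l f.
Proof. elim: l => /= [|a l ->]; ring. Qed.

Lemma lsum_le n (l : seq 'I_n) f g : (forall j, f j <= g j) -> lsum l f <= lsum l g.
Proof. move=> H; elim: l => /= [|a l IH]; [lra|]. have := H a; lra. Qed.

Lemma lsum_nonneg n (l : seq 'I_n) f : (forall j, 0 <= f j) -> 0 <= lsum l f.
Proof. move=> H; elim: l => /= [|a l IH]; [lra|]. have := H a; lra. Qed.

Lemma lsum_abs n (l : seq 'I_n) f : Rabs (lsum l f) <= lsum l (fun j => Rabs (f j)).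
Proof.
  elim: l => /= [|a l IH]; first by rewrite Rabs_R0; lra.
  have := Rabs_triang (f a) (lsum l f); lra.
Qed.

Lemma lsum_const_le n (l : seq 'I_n) f B :
  (forall j, f j <= B) -> lsum l f <= INR (size l) * B.
Proof.
  move=> H; elim: l => [|a l IH]; first by rewrite /=; lra.
  change (INR (size (a :: l))) with (INR (S (size l))); rewrite S_INR.
  change (lsum (a :: l) f) with (f a + lsum l f); have := H a; lra.
Qed.

Lemma lsum_mem n (l : seq 'I_n) f j : (forall k, 0 <= f k) -> j \in l -> f j <= lsum l f.
Proof.
  move=> H; elim: l => //= a l IH; rewrite in_cons => /orP [/eqP ->|Hj].
  - have := lsum_nonneg l f H; lra.
  - have := IH Hj; have := H a; lra.
Qed.

Lemma rsum_ext n (f g : 'I_n -> R) : (forall j, f j = g j) -> rsum f = rsum g.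
Proof. by move=> H; rewrite /rsum; elim: (enum _) => //= a l ->; rewrite H. Qed.
Lemma rsum_plus n (f g : 'I_n -> R) : rsum (fun j => f j + g j) = rsum f + rsum g.
Proof. exact: lsum_plus. Qed.
Lemma rsum_scal n c (f : 'I_n -> R) : rsum (fun j => c * f j) = c * rsum f.
Proof. exact: lsum_scal. Qed.
Lemma rsum_le n (f g : 'I_n -> R) : (forall j, f j <= g j) -> rsum f <= rsum g.
Proof. exact: lsum_le. Qed.
Lemma rsum_nonneg n (f : 'I_n -> R) : (forall j, 0 <= f j) -> 0 <= rsum f.
Proof. exact: lsum_nonneg. Qed.
Lemma rsum_abs n (f : 'I_n -> R) : Rabs (rsum f) <= rsum (fun j => Rabs (f j)).
Proof. exact: lsum_abs. Qed.
Lemma rsum_const_le n (f : 'I_n -> R) B : (forall j, f j <= B) -> rsum f <= INR n * B.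
Proof. by move=> H; have := @lsum_const_le n (enum (ordinal n)) f B H; rewrite size_enum_ord. Qed.
Lemma rsum_mem n (f : 'I_n -> R) j : (forall k, 0 <= f k) -> f j <= rsum f.
Proof. by move=> H; apply: lsum_mem; rewrite ?mem_enum. Qed.

Lemma rsum_minus n (f g : 'I_n -> R) : rsum (fun j => f j - g j) = rsum f - rsum g.
Proof.
  rewrite (@rsum_ext n _ (fun j => f j + (-1) * g j)); last by move=> j; ring.
  rewrite rsum_plus rsum_scal; ring.
Qed.

Lemma rsum_mult_le n (g d : 'I_n -> R) :
  Rabs (rsum (fun j => g j * d j)) <= rsum (fun j => Rabs (g j)) * rsum (fun j => Rabs (d j)).
Proof.
  apply: Rle_trans; first apply: rsum_abs.
  rewrite Rmult_comm -rsum_scal; apply: rsum_le => j.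
  rewrite Rabs_mult Rmult_comm; apply: Rmult_le_compat_r; first apply: Rabs_pos.
  apply: (rsum_mem (fun j => Rabs (d j))) => k; apply: Rabs_pos.
Qed.

Definition norm1 {n : nat} (v : Rn n) : R := rsum (fun j => Rabs (v j)).

Definition box {n : nat} (z : Rn n) (r : R) (a : Rn n) : Prop :=
  forall j, Rabs (a j - z j) < r.

Lemma norm1_ge0 n (v : Rn n) : 0 <= norm1 v.
Proof. apply: rsum_nonneg => j; apply: Rabs_pos. Qed.

Lemma norm1_le n (v : Rn n) B : (forall j, Rabs (v j) <= B) -> norm1 v <= INR n * B.
Proof. exact: rsum_const_le. Qed.

Lemma lsum_sq_le n (l : seq 'I_n) (v : Rn n) :
  lsum l (fun i => v i ^ 2) <= (lsum l (fun j => Rabs (v j))) ^ 2.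
Proof.
  elim: l => /= [|a l IH]; first lra.
  have H1 := lsum_nonneg l (fun j => Rabs (v j)) (fun j => Rabs_pos (v j)).
  have H2 := Rabs_pos (v a).
  have H3 : v a ^ 2 = Rabs (v a) ^ 2 by rewrite pow2_abs.
  nra.
Qed.

Lemma enorm_le_norm1 n (v : Rn n) : enorm v <= norm1 v.
Proof.
  rewrite /enorm -[X in _ <= X]sqrt_pow2; last exact: norm1_ge0.
  apply: sqrt_le_1_alt; exact: lsum_sq_le.
Qed.

Lemma coord_le_enorm n (v : Rn n) j : Rabs (v j) <= enorm v.
Proof.
  rewrite /enorm -(sqrt_pow2 (Rabs (v j))); last apply: Rabs_pos.
  apply: sqrt_le_1_alt; rewrite pow2_abs.
  apply: (rsum_mem (fun i => v i ^ 2)) => k; apply: pow2_ge_0.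
Qed.

Lemma enorm_lt_of_box n (z a : Rn n) r :
  0 < r -> box z (r / (INR n + 1)) a -> enorm (vsub a z) < r.
Proof.
  move=> Hr H.
  have Hn := pos_INR n.
  have H1 : norm1 (vsub a z) <= INR n * (r / (INR n + 1)).
    by apply: norm1_le => j; have := H j; rewrite /vsub; lra.
  have H2 := enorm_le_norm1 (vsub a z).
  have H3 : INR n * (r / (INR n + 1)) < r.
    apply: (Rmult_lt_reg_r (INR n + 1)); first lra.
    field_simplify; lra.
  lra.
Qed.

Lemma box_center n (z : Rn n) r : 0 < r -> box z r z.
Proof. by move=> Hr j; rewrite Rminus_diag Rabs_R0. Qed.

Lemma box_shrink n (z a : Rn n) r r' : r <= r' -> box z r a -> box z r' a.
Proof. by move=> Hr H j; have := H j; lra. Qed.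

Lemma ex_radius_all_coords n (P : 'I_n -> R -> Prop) :
  (forall j r r', 0 < r' <= r -> P j r -> P j r') ->
  (forall j, exists r, 0 < r /\ P j r) -> exists r, 0 < r /\ forall j, P j r.
Proof.
  move=> Hm H.
  suff : forall l : seq 'I_n, exists r, 0 < r /\ forall j, j \in l -> P j r.
    by move=> /(_ (enum 'I_n)) [r [Hr Hl]]; exists r; split => // j; apply: Hl; rewrite mem_enum.
  elim => [|a l [r [Hr Hl]]]; first by exists 1; split => //; lra.
  have [ra [Hra Pa]] := H a.
  exists (Rmin r ra); split; first by apply: Rmin_glb_lt.
  move=> j; rewrite in_cons => /orP [/eqP ->|Hj].
  - apply: (Hm a ra) => //; split; [by apply: Rmin_glb_lt | apply: Rmin_r].
  - apply: (Hm j r); last by apply: Hl. split; [by apply: Rmin_glb_lt | apply: Rmin_l].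
Qed.

Lemma ex_radius_bound_all_coords n (P : 'I_n -> R -> R -> Prop) :
  (forall j r r' C C', 0 < r' <= r -> C <= C' -> P j r C -> P j r' C') ->
  (forall j, exists r C, 0 < r /\ P j r C) -> exists r C, 0 < r /\ forall j, P j r C.
Proof.
  move=> Hm H.
  suff : forall l : seq 'I_n, exists r C, 0 < r /\ forall j, j \in l -> P j r C.
    move=> /(_ (enum 'I_n)) [r [C [Hr Hl]]].
    by exists r, C; split => // j; apply: Hl; rewrite mem_enum.
  elim => [|a l [r [C [Hr Hl]]]]; first by exists 1, 0; split => //; lra.
  have [ra [Ca [Hra Pa]]] := H a.
  exists (Rmin r ra), (Rmax C Ca); split; first by apply: Rmin_glb_lt.
  move=> j; rewrite in_cons => /orP [/eqP ->|Hj].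
  - apply: (Hm a ra _ Ca) => //; [split; [by apply: Rmin_glb_lt | apply: Rmin_r] | apply: Rmax_r].
  - apply: (Hm j r _ C); last by apply: Hl.
    + split; [by apply: Rmin_glb_lt | apply: Rmin_l].
    + apply: Rmax_l.
Qed.

Lemma box_open n (z : Rn n) rho : is_open (box z rho).
Proof.
  move=> y Hy.
  have [r [Hr Hj]] := @ex_radius_all_coords n (fun j r => r <= rho - Rabs (y j - z j))
    ltac:(move=> j r r' ? ?; lra)
    ltac:(move=> j; exists (rho - Rabs (y j - z j)); split; [have := Hy j | ]; lra).
  exists r; split => // w Hw j.
  have H1 := coord_le_enorm (vsub w y) j; change (vsub w y j) with (w j - y j) in H1.
  have := Hj j; have := Rabs_triang (w j - y j) (y j - z j).
  have -> : w j - y j + (y j - z j) = w j - z j by ring.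
  lra.
Qed.

(** * Differential calculus on R^n *)

Lemma upd_upd n (x : Rn n) i t s : upd (upd x i t) i s = upd x i s.
Proof. apply: functional_extensionality => j; rewrite /upd; by case: (j == i). Qed.

Lemma upd_same n (x : Rn n) i : upd x i (x i) = x.
Proof. apply: functional_extensionality => j; rewrite /upd; case: eqP => // ->. done. Qed.

Lemma box_upd n (z y : Rn n) r i s : box z r y -> Rabs (s - z i) < r -> box z r (upd y i s).
Proof. by move=> Hy Hs j; rewrite /upd; case: eqP => [->|_]. Qed.

Lemma MVT_between (phi d : R -> R) a b :
  (forall t, Rmin a b <= t <= Rmax a b -> derivable_pt_lim phi t (d t)) ->
  exists c, Rmin a b <= c <= Rmax a b /\ phi b - phi a = d c * (b - a).
Proof.
  move=> H.
  case: (Rtotal_order a b) => [Hab|[Hab|Hab]].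
  - have [c [Hc1 Hc2]] := @MVT_cor2 phi d _ _ Hab
      (fun c Hc => H c ltac:(rewrite Rmin_left ?Rmax_right; lra)).
    exists c; split; last done. rewrite Rmin_left ?Rmax_right; lra.
  - subst; exists b; split; [rewrite Rmin_left ?Rmax_left; lra | ring].
  - have [c [Hc1 Hc2]] := @MVT_cor2 phi d _ _ Hab
      (fun c Hc => H c ltac:(rewrite Rmin_right ?Rmax_left; lra)).
    exists c; split; [rewrite Rmin_right ?Rmax_left; lra | lra].
Qed.

Lemma open_has_box n (U : Rn n -> Prop) z :
  is_open U -> U z -> exists r, 0 < r /\ forall a, box z r a -> U a.
Proof.
  move=> HU Hz; have [r0 [Hr0 H0]] := HU z Hz.
  have Hn := pos_INR n.
  exists (r0 / (INR n + 1)); split; first by apply: Rdiv_lt_0_compat; lra.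
  by move=> a Ha; apply: H0; apply: enorm_lt_of_box.
Qed.

Lemma cont_on_box n (U : Rn n -> Prop) f z : is_open U -> cont_on U f -> U z ->
  forall eps, 0 < eps -> exists r, 0 < r /\ forall a, box z r a -> U a /\ Rabs (f a - f z) < eps.
Proof.
  move=> HU Hf Hz eps He.
  have [r0 [Hr0 H0]] := open_has_box z HU Hz.
  have [d [Hd Hd']] := Hf z Hz eps He.
  have Hn := pos_INR n.
  have Hd1 : 0 < d / (INR n + 1) by apply: Rdiv_lt_0_compat; lra.
  exists (Rmin r0 (d / (INR n + 1))); split; first by apply: Rmin_glb_lt.
  move=> a Ha.
  have Ua : U a by apply: H0; apply: box_shrink Ha; apply: Rmin_l.
  split => //; apply: Hd' => //; apply: enorm_lt_of_box => //.
  apply: box_shrink Ha; apply: Rmin_r.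
Qed.

Lemma cont_on_box_family n (U : Rn n -> Prop) (g : 'I_n -> Rn n -> R) z : is_open U ->
  (forall j, cont_on U (g j)) -> U z -> forall eps, 0 < eps ->
  exists r, 0 < r /\ forall a, box z r a -> U a /\ forall j, Rabs (g j a - g j z) < eps.
Proof.
  move=> HU Hg Hz eps He.
  have [r0 [Hr0 H0]] := open_has_box z HU Hz.
  have [r [Hr Hj]] := @ex_radius_all_coords n
    (fun j r => forall a, box z r a -> Rabs (g j a - g j z) < eps)
    ltac:(move=> j r r' Hr' H a Ha; apply: H; apply: box_shrink Ha; lra)
    ltac:(move=> j; have [r [Hr H]] := cont_on_box z HU (Hg j) Hz He;
          exists r; split => // a Ha; by case: (H a Ha)).
  exists (Rmin r0 r); split; first by apply: Rmin_glb_lt.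
  move=> a Ha; split.
  - by apply: H0; apply: box_shrink Ha; apply: Rmin_l.
  - by move=> j; apply: Hj; apply: box_shrink Ha; apply: Rmin_r.
Qed.

Lemma partial_upd n (f : Rn n -> R) j w t l :
  partial f j (upd w j t) l -> derivable_pt_lim (fun s => f (upd w j s)) t l.
Proof.
  rewrite /partial; have -> : upd w j t j = t by rewrite /upd eqxx.
  suff -> : (fun s => f (upd (upd w j t) j s)) = (fun s => f (upd w j s)) by [].
  by apply: functional_extensionality => s; rewrite upd_upd.
Qed.

Lemma Rabs_between_lt u v t z r :
  Rmin u v <= t <= Rmax u v -> Rabs (u - z) < r -> Rabs (v - z) < r -> Rabs (t - z) < r.
Proof. rewrite /Rmin /Rmax; case: Rle_dec => _ Ht; split_Rabs; lra. Qed.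

Definition mix_coords {n} (a b : Rn n) (l : seq 'I_n) : Rn n :=
  fun j => if j \in l then b j else a j.

(* Replacing the coordinates of a by those of b one at a time, with the mean value theorem at
   each step, is the usual proof that continuous partial derivatives give differentiability. *)
Lemma box_first_order n (U : Rn n -> Prop) (f : Rn n -> R) (g : 'I_n -> Rn n -> R) z :
  is_open U -> (forall j x, U x -> partial f j x (g j x)) -> (forall j, cont_on U (g j)) -> U z ->
  forall eps, 0 < eps -> exists r, 0 < r /\ (forall a, box z r a -> U a) /\
    forall a b, box z r a -> box z r b ->
      Rabs (f b - f a - rsum (fun j => g j z * (b j - a j))) <= eps * norm1 (vsub b a).
Proof.
  move=> HU Hf Hg Hz eps He.
  have [r [Hr Hb]] := @cont_on_box_family n U g z HU Hg Hz eps He.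
  exists r; split => //; split; first by move=> a /Hb [].
  move=> a b Ha Hb'.
  have Hw : forall l, box z r (mix_coords a b l).
    by move=> l j; rewrite /mix_coords; case: (j \in l); [apply: Hb' | apply: Ha].
  suff Hl : forall l : seq 'I_n, uniq l ->
      Rabs (f (mix_coords a b l) - f a - lsum l (fun j => g j z * (b j - a j)))
        <= eps * lsum l (fun j => Rabs (vsub b a j)).
    have := Hl (enum 'I_n) (enum_uniq _).
    suff -> : mix_coords a b (enum 'I_n) = b by [].
    by apply: functional_extensionality => j; rewrite /mix_coords mem_enum.
  elim => [|j l IH] /=.
  - move=> _; have -> : mix_coords a b [::] = a by apply: functional_extensionality.
    rewrite Rminus_diag Rminus_0_r Rabs_R0; lra.
  - move=> /andP [Hjl Hu]; have {}IH := IH Hu.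
    have Ew : mix_coords a b (j :: l) = upd (mix_coords a b l) j (b j).
      apply: functional_extensionality => k; rewrite /mix_coords /upd in_cons.
      by case: eqP => [->|_].
    have Ea : mix_coords a b l j = a j by rewrite /mix_coords (negbTE Hjl).
    set w := mix_coords a b l in IH Ew Ea.
    have Hbox : forall t, Rmin (a j) (b j) <= t <= Rmax (a j) (b j) -> box z r (upd w j t).
      by move=> t Ht; apply: box_upd; [exact: Hw | exact: Rabs_between_lt Ht (Ha j) (Hb' j)].
    have [c [Hc Hc']] := @MVT_between (fun t => f (upd w j t)) (fun t => g j (upd w j t))
      (a j) (b j)
      (fun t Ht => partial_upd (Hf j _ (proj1 (Hb _ (Hbox t Ht))))).
    have Hgj := proj2 (Hb _ (Hbox c Hc)) j.
    rewrite -Ea upd_same Ea in Hc'.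
    rewrite Ew /= /vsub.
    move: IH; rewrite /vsub; set S1 := lsum l _; set S2 := lsum l _ => IH.
    set D := g j (upd w j c) in Hc' Hgj.
    have E2 : Rabs (D * (b j - a j) - g j z * (b j - a j)) <= eps * Rabs (b j - a j).
      rewrite -Rmult_minus_distr_r Rabs_mult.
      apply: Rmult_le_compat_r; [apply: Rabs_pos | lra].
    have -> : f (upd w j (b j)) - f a - (g j z * (b j - a j) + S1) =
        (f w - f a - S1) + (D * (b j - a j) - g j z * (b j - a j)) by rewrite -Hc'; ring.
    have := Rabs_triang (f w - f a - S1) (D * (b j - a j) - g j z * (b j - a j)); lra.
Qed.

Lemma deriv_in_locally_lipschitz I f t l : deriv_in I f t l ->
  exists d, 0 < d /\ forall s, I s -> Rabs (s - t) < d ->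
    Rabs (f s - f t) <= (Rabs l + 1) * Rabs (s - t).
Proof.
  move=> H; have [d [Hd Hd']] := H 1 Rlt_0_1.
  exists d; split => // s Is Hs.
  case: (Req_dec s t) => [->|Hst]; first by rewrite !Rminus_diag Rabs_R0; lra.
  have E : f s - f t = ((f s - f t) / (s - t)) * (s - t) by field; lra.
  rewrite E Rabs_mult; apply: Rmult_le_compat_r; first apply: Rabs_pos.
  have := Hd' s Is Hst Hs; have := Rabs_triang_inv ((f s - f t) / (s - t)) l; lra.
Qed.

Lemma deriv_in_restrict (I J : R -> Prop) f t l :
  (exists d, 0 < d /\ forall s, I s -> Rabs (s - t) < d -> J s) ->
  deriv_in J f t l -> deriv_in I f t l.
Proof.
  move=> [d [Hd HIJ]] H eps He; have [d' [Hd' H']] := H eps He.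
  exists (Rmin d d'); split; first by apply: Rmin_glb_lt.
  move=> s Is Hst Hs; have := Rmin_l d d'; have := Rmin_r d d' => ? ?.
  by apply: H' => //; [apply: HIJ => //; lra | lra].
Qed.

Lemma deriv_in_union (I J1 J2 : R -> Prop) f t l :
  (exists d, 0 < d /\ forall s, I s -> Rabs (s - t) < d -> J1 s \/ J2 s) ->
  deriv_in J1 f t l -> deriv_in J2 f t l -> deriv_in I f t l.
Proof.
  move=> [d [Hd HIJ]] H1 H2 eps He.
  have [d1 [Hd1 H1']] := H1 eps He; have [d2 [Hd2 H2']] := H2 eps He.
  exists (Rmin d (Rmin d1 d2)); split; first by repeat apply: Rmin_glb_lt.
  move=> s Is Hst Hs.
  have := Rmin_l d (Rmin d1 d2); have := Rmin_r d (Rmin d1 d2).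
  have := Rmin_l d1 d2; have := Rmin_r d1 d2 => ? ? ? ?.
  by case: (HIJ s Is ltac:(lra)) => Hs'; [apply: H1' | apply: H2'] => //; lra.
Qed.

Lemma deriv_in_ext (I : R -> Prop) f g t l :
  (forall s, I s -> f s = g s) -> I t -> deriv_in I f t l -> deriv_in I g t l.
Proof.
  move=> E It H eps He; have [d [Hd H']] := H eps He; exists d; split => // s Is Hst Hs.
  by rewrite -!E //; apply: H'.
Qed.

Lemma deriv_in_shift (I : R -> Prop) f t l a :
  deriv_in I f t l -> deriv_in (fun s => I (s - a)) (fun s => f (s - a)) (t + a) l.
Proof.
  move=> H eps He; have [d [Hd H']] := H eps He; exists d; split => // s Is Hst Hs.
  have E : s - (t + a) = (s - a) - t by ring.
  rewrite E (_ : t + a - a = t); last ring.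
  by apply: H' => //; [lra | rewrite -E].
Qed.

Lemma derivable_deriv_in (I : R -> Prop) f t l :
  derivable_pt_lim f t l -> deriv_in I f t l.
Proof.
  move=> H eps He; have [d Hd] := H eps He; exists d; split; first by apply: cond_pos.
  move=> s Is Hst Hs.
  by have := Hd (s - t) ltac:(lra) Hs; rewrite (_ : t + (s - t) = s); last ring.
Qed.

Lemma derivable_of_deriv_in (I : R -> Prop) f g t l :
  deriv_in I f t l -> (exists d, 0 < d /\ forall s, Rabs (s - t) < d -> I s /\ g s = f s) ->
  g t = f t -> derivable_pt_lim g t l.
Proof.
  move=> H [d [Hd Hg]] Ht eps He; have [d' [Hd' H']] := H eps He.
  have Hm : 0 < Rmin d d' by apply: Rmin_glb_lt.
  exists (mkposreal _ Hm) => h Hh Hh'; simpl in Hh'.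
  have E : t + h - t = h by ring.
  have [I1 E1] := Hg (t + h) ltac:(rewrite E; have := Rmin_l d d'; lra).
  rewrite E1 Ht.
  have := H' (t + h) I1 ltac:(lra) ltac:(rewrite E; have := Rmin_r d d'; lra).
  by rewrite E.
Qed.

Lemma deriv_in_plus (I : R -> Prop) f g t a b :
  deriv_in I f t a -> deriv_in I g t b -> deriv_in I (fun s => f s + g s) t (a + b).
Proof.
  move=> H1 H2 eps He.
  have [d1 [Hd1 H1']] := H1 (eps / 2) ltac:(lra); have [d2 [Hd2 H2']] := H2 (eps / 2) ltac:(lra).
  exists (Rmin d1 d2); split; first by apply: Rmin_glb_lt.
  move=> s Is Hst Hs.
  have A1 := H1' s Is Hst ltac:(have := Rmin_l d1 d2; lra).
  have A2 := H2' s Is Hst ltac:(have := Rmin_r d1 d2; lra).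
  have -> : (f s + g s - (f t + g t)) / (s - t) - (a + b) =
      ((f s - f t) / (s - t) - a) + ((g s - g t) / (s - t) - b) by field; lra.
  have := Rabs_triang ((f s - f t) / (s - t) - a) ((g s - g t) / (s - t) - b); lra.
Qed.

Lemma deriv_in_const (I : R -> Prop) c t : deriv_in I (fun _ => c) t 0.
Proof. apply: derivable_deriv_in; apply: derivable_pt_lim_const. Qed.

Lemma Rabs_mult_le_small u v e :
  0 <= e -> Rabs u <= e / (Rabs v + 1) -> Rabs (u * v) <= e.
Proof.
  move=> He Hu; have Hv := Rabs_pos v; rewrite Rabs_mult.
  have : Rabs u * Rabs v <= e / (Rabs v + 1) * Rabs v by apply: Rmult_le_compat_r.
  have : e / (Rabs v + 1) * Rabs v <= e.
    apply: (Rmult_le_reg_r (Rabs v + 1)); first lra. field_simplify; nra.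
  lra.
Qed.

Lemma deriv_in_mult (I : R -> Prop) f g t a b :
  I t -> deriv_in I f t a -> deriv_in I g t b ->
  deriv_in I (fun s => f s * g s) t (a * g t + f t * b).
Proof.
  move=> It H1 H2 eps He.
  have [dc [Hdc Hc]] := deriv_in_locally_lipschitz H2.
  have Hgt := Rabs_pos (g t); have Hft := Rabs_pos (f t); have Hb := Rabs_pos b.
  set ef := eps / 3 / (Rabs (g t) + 1).
  have Hef : 0 < ef by apply: Rdiv_lt_0_compat; lra.
  have [d1 [Hd1 H1']] := H1 ef Hef.
  have [d2 [Hd2 H2']] := H2 (eps / 3 / (Rabs (f t) + 1)) ltac:(apply: Rdiv_lt_0_compat; lra).
  set K := Rabs a + ef.
  have HK : 0 < K by rewrite /K; have := Rabs_pos a; lra.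
  set e3 := eps / 3 / (K * (Rabs b + 1)).
  have He3 : 0 < e3 by apply: Rdiv_lt_0_compat; [lra | nra].
  exists (Rmin (Rmin d1 d2) (Rmin dc e3)); split; first by repeat apply: Rmin_glb_lt.
  move=> s Is Hst Hs.
  have := Rmin_l (Rmin d1 d2) (Rmin dc e3); have := Rmin_r (Rmin d1 d2) (Rmin dc e3).
  have := Rmin_l d1 d2; have := Rmin_r d1 d2; have := Rmin_l dc e3; have := Rmin_r dc e3.
  move=> ? ? ? ? ? ?.
  have A1 := H1' s Is Hst ltac:(lra). have A2 := H2' s Is Hst ltac:(lra).
  have A3 := Hc s Is ltac:(lra).
  set qf := (f s - f t) / (s - t) in A1; set qg := (g s - g t) / (s - t) in A2.
  have -> : (f s * g s - f t * g t) / (s - t) - (a * g t + f t * b) =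
      (qf - a) * g t + (qg - b) * f t + qf * (g s - g t) by rewrite /qf /qg; field; lra.
  have T1 : Rabs ((qf - a) * g t) <= eps / 3.
    by apply: Rabs_mult_le_small; [lra | exact: Rlt_le A1].
  have T2 : Rabs ((qg - b) * f t) <= eps / 3.
    by apply: Rabs_mult_le_small; [lra | exact: Rlt_le A2].
  have T3 : Rabs (qf * (g s - g t)) < eps / 3.
    have Hqf : Rabs qf <= K by rewrite /K; have := Rabs_triang_inv qf a; lra.
    have Hdg : Rabs (g s - g t) < (Rabs b + 1) * e3 by have := Rabs_pos (s - t); nra.
    have E : K * ((Rabs b + 1) * e3) = eps / 3 by rewrite /e3; field; lra.
    rewrite Rabs_mult; have := Rabs_pos qf; have := Rabs_pos (g s - g t); nra.
  have := Rabs_triang ((qf - a) * g t + (qg - b) * f t) (qf * (g s - g t)).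
  have := Rabs_triang ((qf - a) * g t) ((qg - b) * f t).
  lra.
Qed.

Definition clamp (a b s : R) := Rmax a (Rmin b s).

Lemma clamp_in a b s : a <= b -> a <= clamp a b s <= b.
Proof. rewrite /clamp => H; split; [apply: Rmax_l | apply: Rmax_lub => //; apply: Rmin_l]. Qed.

Lemma clamp_id a b s : a <= s <= b -> clamp a b s = s.
Proof. rewrite /clamp => H; rewrite Rmin_right ?Rmax_right; lra. Qed.

Lemma clamp_lipschitz a b s s' : Rabs (clamp a b s - clamp a b s') <= Rabs (s - s').
Proof.
  rewrite /clamp.
  have H1 : forall x y, Rabs (Rmin b x - Rmin b y) <= Rabs (x - y).
    by move=> x y; rewrite /Rmin; repeat case: Rle_dec => ?; split_Rabs; lra.
  have H2 : forall x y, Rabs (Rmax a x - Rmax a y) <= Rabs (x - y).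
    by move=> x y; rewrite /Rmax; repeat case: Rle_dec => ?; split_Rabs; lra.
  exact: Rle_trans (H2 _ _) (H1 _ _).
Qed.

(* Extending f outside [a, b] by f \o clamp a b reduces to the mean value theorem on R. *)
Lemma MVT_deriv_in (I : R -> Prop) f d a b :
  is_interval I -> I a -> I b -> a <= b -> (forall t, I t -> deriv_in I f t (d t)) ->
  exists c, a <= c <= b /\ f b - f a = d c * (b - a).
Proof.
  move=> HI Ia Ib Hab Hd.
  case: (Req_dec a b) => [<-|Hab']; first by exists a; split; [lra|ring].
  have Hab2 : a < b by lra.
  set phi := fun s => f (clamp a b s).
  have Hsub : forall s, a <= s <= b -> I s by move=> s Hs; apply: (HI a s b) => //; lra.
  have D1 : forall x, Rmin a b < x < Rmax a b -> is_derive phi x (d x).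
    move=> x; rewrite Rmin_left ?Rmax_right; try lra; move=> Hx.
    apply/is_derive_Reals.
    apply: (@derivable_of_deriv_in I f phi x (d x) (Hd x (Hsub x ltac:(lra)))).
    + exists (Rmin (x - a) (b - x)); split; first by apply: Rmin_glb_lt; lra.
      move=> s Hs; have := Rmin_l (x - a) (b - x); have := Rmin_r (x - a) (b - x) => ? ?.
      have Hs' : a <= s <= b by split_Rabs; lra.
      by split; [apply: Hsub | rewrite /phi clamp_id].
    + by rewrite /phi clamp_id //; lra.
  have D2 : forall x, Rmin a b <= x <= Rmax a b -> continuity_pt phi x.
    move=> x; rewrite Rmin_left ?Rmax_right; try lra; move=> Hx.
    have [dd [Hdd Hdd']] := deriv_in_locally_lipschitz (Hd x (Hsub x Hx)).
    apply: (proj2 (continuity_pt_filterlim _ _)); apply/filterlim_locally => eps.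
    set K := Rabs (d x) + 1.
    have HK : 0 < K by rewrite /K; have := Rabs_pos (d x); lra.
    have He2 : 0 < Rmin dd (eps / K).
      by apply: Rmin_glb_lt => //; apply: Rdiv_lt_0_compat => //; apply: cond_pos.
    exists (mkposreal _ He2) => y Hy.
    have Hy' : Rabs (y - x) < Rmin dd (eps / K) by apply: Hy.
    have Hcl : Rabs (clamp a b y - x) <= Rabs (y - x).
      by have := clamp_lipschitz a b y x; rewrite (clamp_id (s := x)).
    have Hin := clamp_in y (Rlt_le _ _ Hab2).
    have H1 := Hdd' _ (Hsub _ Hin) ltac:(have := Rmin_l dd (eps / K); lra).
    have H2 : K * Rabs (clamp a b y - x) < K * (eps / K).
      by apply: Rmult_lt_compat_l => //; have := Rmin_r dd (eps / K); lra.
    rewrite (_ : K * (eps / K) = eps) in H2; last by field; lra.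
    change (Rabs (phi y - phi x) < eps).
    rewrite /phi (clamp_id (s := x)) //; rewrite /K in H1 H2; lra.
  have [c [Hc Hc']] := MVT_gen phi a b d D1 D2.
  rewrite Rmin_left ?Rmax_right in Hc; try lra.
  exists c; split => //; move: Hc'; rewrite /phi !clamp_id //; lra.
Qed.

Lemma deriv_in_nonpos_nonincreasing (I : R -> Prop) f d a b :
  is_interval I -> I a -> I b -> a <= b -> (forall t, I t -> deriv_in I f t (d t)) ->
  (forall t, I t -> d t <= 0) -> f b <= f a.
Proof.
  move=> HI Ia Ib Hab Hd Hneg.
  have [c [Hc E]] := @MVT_deriv_in I f d a b HI Ia Ib Hab Hd.
  have := Hneg c (HI a c b Ia Ib (proj1 Hc) (proj2 Hc)); nra.
Qed.

Lemma deriv_in_nonneg_nondecreasing (I : R -> Prop) f d a b :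
  is_interval I -> I a -> I b -> a <= b -> (forall t, I t -> deriv_in I f t (d t)) ->
  (forall t, I t -> 0 <= d t) -> f a <= f b.
Proof.
  move=> HI Ia Ib Hab Hd Hpos.
  have [c [Hc E]] := @MVT_deriv_in I f d a b HI Ia Ib Hab Hd.
  have := Hpos c (HI a c b Ia Ib (proj1 Hc) (proj2 Hc)); nra.
Qed.

Lemma deriv_in_bounded_lipschitz (I : R -> Prop) f d a b L :
  is_interval I -> I a -> I b -> (forall t, I t -> deriv_in I f t (d t)) ->
  (forall t, I t -> Rabs (d t) <= L) -> Rabs (f b - f a) <= L * Rabs (b - a).
Proof.
  move=> HI Ia Ib Hd HL.
  wlog Hab : a b Ia Ib / a <= b.
    move=> W; case: (Rle_dec a b) => H; first exact: W.
    rewrite -Rabs_Ropp -(Rabs_Ropp (b - a)).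
    rewrite (_ : - (f b - f a) = f a - f b); last ring.
    rewrite (_ : - (b - a) = a - b); last ring.
    apply: W => //; lra.
  have [c [Hc E]] := @MVT_deriv_in I f d a b HI Ia Ib Hab Hd.
  rewrite E Rabs_mult; apply: Rmult_le_compat_r; first exact: Rabs_pos.
  exact: HL (HI a c b Ia Ib (proj1 Hc) (proj2 Hc)).
Qed.

Lemma deriv_in_near (I : R -> Prop) f T l rho : 0 < rho -> deriv_in I f T l ->
  exists d, 0 < d /\ forall s, I s -> Rabs (s - T) < d -> Rabs (f s - f T) < rho.
Proof.
  move=> Hr Hd; have [d1 [Hd1 H1]] := deriv_in_locally_lipschitz Hd.
  have Hl := Rabs_pos l.
  exists (Rmin d1 (rho / (Rabs l + 1))); split.
    by apply: Rmin_glb_lt => //; apply: Rdiv_lt_0_compat; lra.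
  move=> s Is Hs.
  have := H1 s Is ltac:(have := Rmin_l d1 (rho / (Rabs l + 1)); lra).
  have : (Rabs l + 1) * Rabs (s - T) < (Rabs l + 1) * (rho / (Rabs l + 1)).
    by apply: Rmult_lt_compat_l; [lra | have := Rmin_r d1 (rho / (Rabs l + 1)); lra].
  rewrite (_ : (Rabs l + 1) * (rho / (Rabs l + 1)) = rho); [lra | field; lra].
Qed.

Lemma deriv_in_near_box n (I : R -> Prop) (x : R -> Rn n) (v : 'I_n -> R) T rho : 0 < rho ->
  (forall j, deriv_in I (fun s => x s j) T (v j)) ->
  exists d, 0 < d /\ forall s, I s -> Rabs (s - T) < d -> box (x T) rho (x s).
Proof.
  move=> Hr Hd.
  have [d [Hd0 Hj]] := @ex_radius_all_coords n
    (fun j d => forall s, I s -> Rabs (s - T) < d -> Rabs (x s j - x T j) < rho)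
    ltac:(move=> j d d' Hd' H s Is Hs; apply: H => //; lra)
    (fun j => deriv_in_near Hr (Hd j)).
  by exists d; split => // s Is Hs j; apply: Hj.
Qed.

(* D is the increment of f over a time step Dt, q the difference quotients of the coordinates. *)
Lemma difference_quotient_estimate n (g v q : 'I_n -> R) D Dt e1 eta :
  Dt <> 0 -> 0 <= e1 -> eta <= 1 -> (forall j, Rabs (q j - v j) < eta) ->
  Rabs (D - Dt * rsum (fun j => g j * q j)) <= e1 * (Rabs Dt * rsum (fun j => Rabs (q j))) ->
  Rabs (D / Dt - rsum (fun j => g j * v j)) <=
    e1 * (rsum (fun j => Rabs (v j)) + INR n) + rsum (fun j => Rabs (g j)) * eta.
Proof.
  move=> HDt He1 Heta Hqv.
  set Sq := rsum (fun j => g j * q j); set Sv := rsum (fun j => g j * v j) => HD.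
  have Hq : rsum (fun j => Rabs (q j)) <= rsum (fun j => Rabs (v j)) + INR n.
    have : rsum (fun j => Rabs (q j)) <= rsum (fun j => Rabs (v j) + 1).
      by apply: rsum_le => j; have := Hqv j; have := Rabs_triang_inv (q j) (v j); lra.
    have : rsum (fun j : 'I_n => 1) <= INR n * 1 by apply: rsum_const_le => j; lra.
    rewrite rsum_plus; lra.
  have Elin : Rabs (Sq - Sv) <= rsum (fun j => Rabs (g j)) * eta.
    rewrite /Sq /Sv -rsum_minus; apply: Rle_trans; first exact: rsum_abs.
    rewrite Rmult_comm -rsum_scal; apply: rsum_le => j.
    rewrite -Rmult_minus_distr_l Rabs_mult Rmult_comm.
    apply: Rmult_le_compat_r; [exact: Rabs_pos | exact: Rlt_le (Hqv j)].
  have Hpos : 0 < Rabs Dt by apply: Rabs_pos_lt.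
  have Erem : Rabs ((D - Dt * Sq) / Dt) <= e1 * (rsum (fun j => Rabs (v j)) + INR n).
    rewrite /Rdiv Rabs_mult Rabs_inv.
    apply: (Rmult_le_reg_r (Rabs Dt)) => //; rewrite Rmult_assoc Rinv_l; last lra.
    have H3 : Rabs Dt * rsum (fun j => Rabs (q j)) <= Rabs Dt * (rsum (fun j => Rabs (v j)) + INR n).
      by apply: Rmult_le_compat_l; lra.
    have := Rmult_le_compat_l e1 _ _ He1 H3; lra.
  rewrite (_ : D / Dt - Sv = (Sq - Sv) + (D - Dt * Sq) / Dt); last by field.
  have := Rabs_triang (Sq - Sv) ((D - Dt * Sq) / Dt); lra.
Qed.

Lemma chain_rule_deriv_in n (U : Rn n -> Prop) (f : Rn n -> R) (g : 'I_n -> Rn n -> R)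
  (x : R -> Rn n) (v : 'I_n -> R) I t :
  is_open U -> (forall j y, U y -> partial f j y (g j y)) -> (forall j, cont_on U (g j)) ->
  U (x t) -> (forall j, deriv_in I (fun s => x s j) t (v j)) ->
  deriv_in I (fun s => f (x s)) t (rsum (fun j => g j (x t) * v j)).
Proof.
  move=> HU Hf Hg Hx Hv eps He.
  set z := x t.
  set A := rsum (fun j => Rabs (g j z)); set B := rsum (fun j => Rabs (v j)).
  have HA : 0 <= A by apply: rsum_nonneg => j; apply: Rabs_pos.
  have HB : 0 <= B by apply: rsum_nonneg => j; apply: Rabs_pos.
  have HN := pos_INR n.
  set e1 := eps / (2 * (B + INR n + 1)).
  have He1 : 0 < e1 by apply: Rdiv_lt_0_compat; lra.
  set eta := Rmin 1 (eps / (2 * (A + 1))).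
  have Heta : 0 < eta by apply: Rmin_glb_lt; [lra | apply: Rdiv_lt_0_compat; lra].
  have [r [Hr [_ Hfo]]] := @box_first_order n U f g z HU Hf Hg Hx e1 He1.
  have [d1 [Hd1 Hq]] := @ex_radius_all_coords n (fun j d => forall s, I s -> s <> t ->
      Rabs (s - t) < d -> Rabs ((x s j - x t j) / (s - t) - v j) < eta)
    ltac:(move=> j d d' Hd' H s Is Hst Hs; apply: H => //; lra)
    ltac:(move=> j; have [d [Hd H]] := Hv j eta Heta; by exists d).
  have [d2 [Hd2 Hbox]] := @deriv_in_near_box n I x v t r Hr Hv.
  exists (Rmin d1 d2); split; first by apply: Rmin_glb_lt.
  move=> s Is Hst Hs.
  have Hst' : s - t <> 0 by lra.
  set q := fun j => (x s j - x t j) / (s - t).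
  have Ex : forall j, x s j - z j = (s - t) * q j by move=> j; rewrite /q /z; field.
  have := @difference_quotient_estimate n (fun j => g j z) v q (f (x s) - f z) (s - t) e1 eta
    Hst' (Rlt_le _ _ He1) (Rmin_l _ _)
    (fun j => Hq j s Is Hst ltac:(have := Rmin_l d1 d2; lra)).
  have Hxs := Hbox s Is ltac:(have := Rmin_r d1 d2; lra).
  have Hlin : rsum (fun j => g j z * (x s j - z j)) = (s - t) * rsum (fun j => g j z * q j).
    by rewrite -rsum_scal; apply: rsum_ext => j; rewrite Ex; ring.
  have Hn1 : norm1 (vsub (x s) z) = Rabs (s - t) * rsum (fun j => Rabs (q j)).
    by rewrite -rsum_scal; apply: rsum_ext => j; rewrite /vsub Ex Rabs_mult.
  have := Hfo z (x s) (box_center z Hr) Hxs.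
  rewrite Hlin Hn1 => H1 /(_ H1); rewrite -/A -/B => H2.
  have : e1 * (B + INR n) < eps / 2.
    by rewrite /e1; apply: (Rmult_lt_reg_r (2 * (B + INR n + 1))); [lra | field_simplify; lra].
  have : A * eta < eps / 2.
    have : A * eta <= A * (eps / (2 * (A + 1))) by apply: Rmult_le_compat_l => //; apply: Rmin_r.
    have : A * (eps / (2 * (A + 1))) < eps / 2.
      by apply: (Rmult_lt_reg_r (2 * (A + 1))); [lra | field_simplify; lra].
    lra.
  lra.
Qed.

Lemma cont_on_ext n (U : Rn n -> Prop) f g :
  (forall x, U x -> f x = g x) -> cont_on U f -> cont_on U g.
Proof.
  move=> E H x Ux eps He; have [d [Hd H']] := H x Ux eps He; exists d; split => // y Uy Hy.
  rewrite -!E //; by apply: H'.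
Qed.

Lemma cont_on_const n (U : Rn n -> Prop) c : cont_on U (fun _ => c).
Proof. move=> x Ux eps He; exists 1; split; [lra|] => y _ _; rewrite Rminus_diag Rabs_R0; lra. Qed.

Lemma cont_on_plus n (U : Rn n -> Prop) f g :
  cont_on U f -> cont_on U g -> cont_on U (fun x => f x + g x).
Proof.
  move=> Hf Hg x Ux eps He.
  have [d1 [Hd1 H1]] := Hf x Ux (eps/2) ltac:(lra).
  have [d2 [Hd2 H2]] := Hg x Ux (eps/2) ltac:(lra).
  exists (Rmin d1 d2); split; first by apply: Rmin_glb_lt.
  move=> y Uy Hy.
  have := H1 y Uy ltac:(have := Rmin_l d1 d2; lra).
  have := H2 y Uy ltac:(have := Rmin_r d1 d2; lra).
  move=> A B; have := Rabs_triang (f y - f x) (g y - g x).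
  have -> : f y + g y - (f x + g x) = (f y - f x) + (g y - g x) by ring.
  lra.
Qed.

Lemma cont_on_mult n (U : Rn n -> Prop) f g :
  cont_on U f -> cont_on U g -> cont_on U (fun x => f x * g x).
Proof.
  move=> Hf Hg x Ux eps He.
  have Hgx := Rabs_pos (g x); have Hfx := Rabs_pos (f x).
  set ef := Rmin 1 (eps / (2 * (Rabs (g x) + 2))).
  set eg := Rmin 1 (eps / (2 * (Rabs (f x) + 1))).
  have Hef : 0 < ef by apply: Rmin_glb_lt; [lra | apply: Rdiv_lt_0_compat; lra].
  have Heg : 0 < eg by apply: Rmin_glb_lt; [lra | apply: Rdiv_lt_0_compat; lra].
  have [d1 [Hd1 H1]] := Hf x Ux ef Hef; have [d2 [Hd2 H2]] := Hg x Ux eg Heg.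
  exists (Rmin d1 d2); split; first by apply: Rmin_glb_lt.
  move=> y Uy Hy.
  have A := H1 y Uy ltac:(have := Rmin_l d1 d2; lra).
  have B := H2 y Uy ltac:(have := Rmin_r d1 d2; lra).
  have -> : f y * g y - f x * g x = (f y - f x) * g y + f x * (g y - g x) by ring.
  have Hgy : Rabs (g y) <= Rabs (g x) + 1.
    have := Rabs_triang_inv (g y) (g x); have : eg <= 1 by apply: Rmin_l.
    lra.
  have T1 : Rabs ((f y - f x) * g y) < eps / 2.
    rewrite Rabs_mult.
    have : Rabs (f y - f x) * Rabs (g y) <= ef * (Rabs (g x) + 1).
      apply: Rmult_le_compat; try apply: Rabs_pos; lra.
    have : ef * (Rabs (g x) + 1) <= eps / (2 * (Rabs (g x) + 2)) * (Rabs (g x) + 1).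
      apply: Rmult_le_compat_r; [lra | apply: Rmin_r].
    have : eps / (2 * (Rabs (g x) + 2)) * (Rabs (g x) + 1) < eps / 2.
      by apply: (Rmult_lt_reg_r (2 * (Rabs (g x) + 2))); [lra | field_simplify; nra].
    lra.
  have T2 : Rabs (f x * (g y - g x)) < eps / 2.
    rewrite Rabs_mult.
    have : Rabs (f x) * Rabs (g y - g x) <= Rabs (f x) * eg by apply: Rmult_le_compat_l; lra.
    have : Rabs (f x) * eg <= Rabs (f x) * (eps / (2 * (Rabs (f x) + 1))).
      by apply: Rmult_le_compat_l; [lra | apply: Rmin_r].
    have : Rabs (f x) * (eps / (2 * (Rabs (f x) + 1))) < eps / 2.
      by apply: (Rmult_lt_reg_r (2 * (Rabs (f x) + 1))); [lra | field_simplify; nra].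
    lra.
  have := Rabs_triang ((f y - f x) * g y) (f x * (g y - g x)); lra.
Qed.

Lemma partial_ext n (U : Rn n -> Prop) f g i x l :
  is_open U -> (forall y, U y -> f y = g y) -> U x -> partial f i x l -> partial g i x l.
Proof.
  move=> HU E Ux H eps He; have [d Hd] := H eps He.
  have [r [Hr Hb]] := open_has_box x HU Ux.
  have Hm : 0 < Rmin d r by apply: Rmin_glb_lt => //; apply: cond_pos.
  exists (mkposreal _ Hm) => h Hh Hh'; simpl in Hh'.
  have U1 : forall s, Rabs (s - x i) < r -> U (upd x i s).
    by move=> s Hs; apply: Hb; apply: box_upd => //; apply: box_center.
  rewrite -!E; try apply: U1.
  - apply: Hd => //; have := Rmin_l d r; lra.
  - rewrite Rminus_diag Rabs_R0 //.
  - rewrite (_ : x i + h - x i = h); last ring.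
    have := Rmin_r d r; lra.
Qed.

Lemma partial_unique n (f : Rn n -> R) i x l1 l2 :
  partial f i x l1 -> partial f i x l2 -> l1 = l2.
Proof. apply: uniqueness_limite. Qed.

Lemma Ck_ext n (U : Rn n -> Prop) k : is_open U ->
  forall f g, (forall x, U x -> f x = g x) -> Ck U k f -> Ck U k g.
Proof.
  move=> HU; elim: k => [|k IH] f g E /=; first by apply: cont_on_ext.
  move=> [Hc Hp]; split; first by apply: (@cont_on_ext n U f g E Hc).
  move=> i; have [h [Hh1 Hh2]] := Hp i; exists h; split => // x Ux.
  apply: (@partial_ext n U f g i x (h x) HU E Ux); by apply: Hh1.
Qed.

Lemma Ck_S n (U : Rn n -> Prop) k f : Ck U (S k) f -> Ck U k f.
Proof.
  elim: k f => [|k IH] f /=; first by case.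
  move=> [Hc Hp]; split => // i; have [h [Hh1 Hh2]] := Hp i.
  by exists h; split => //; apply: IH.
Qed.

Lemma Ck_const n (U : Rn n -> Prop) k c : Ck U k (fun _ => c).
Proof.
  elim: k c => [|k IH] c /=; first by apply: cont_on_const.
  split; first by apply: cont_on_const.
  move=> i; exists (fun _ => 0); split; last by apply: IH.
  move=> x _; rewrite /partial; apply: derivable_pt_lim_const.
Qed.

Lemma Ck_plus n (U : Rn n -> Prop) k :
  forall f g, Ck U k f -> Ck U k g -> Ck U k (fun x => f x + g x).
Proof.
  elim: k => [|k IH] f g /=; first by apply: cont_on_plus.
  move=> [Hfc Hfp] [Hgc Hgp]; split; first by apply: cont_on_plus.
  move=> i; have [f' [Hf1 Hf2]] := Hfp i; have [g' [Hg1 Hg2]] := Hgp i.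
  exists (fun x => f' x + g' x); split; last by apply: IH.
  move=> x Ux; rewrite /partial.
  exact: (derivable_pt_lim_plus (fun t => f (upd x i t)) (fun t => g (upd x i t)) _ _ _
    (Hf1 x Ux) (Hg1 x Ux)).
Qed.

Lemma Ck_mult n (U : Rn n -> Prop) k :
  forall f g, Ck U k f -> Ck U k g -> Ck U k (fun x => f x * g x).
Proof.
  elim: k => [|k IH] f g /=; first by apply: cont_on_mult.
  move=> [Hfc Hfp] [Hgc Hgp]; split; first by apply: cont_on_mult.
  move=> i; have [f' [Hf1 Hf2]] := Hfp i; have [g' [Hg1 Hg2]] := Hgp i.
  exists (fun x => f' x * g x + f x * g' x); split.
  - move=> x Ux; rewrite /partial.
    have := derivable_pt_lim_mult (fun t => f (upd x i t)) (fun t => g (upd x i t)) (x i) _ _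
      (Hf1 x Ux) (Hg1 x Ux).
    by rewrite /= upd_same.
  - have Ef : Ck U k f by apply: (@Ck_S n U k f); split.
    have Eg : Ck U k g by apply: (@Ck_S n U k g); split.
    apply: Ck_plus; apply: IH => //.
Qed.

Lemma Ck_lsum n (U : Rn n -> Prop) k (l : seq 'I_n) (F : 'I_n -> Rn n -> R) :
  (forall j, Ck U k (F j)) -> Ck U k (fun x => lsum l (fun j => F j x)).
Proof.
  move=> H; elim: l => [|a l IH] /=; first by apply: Ck_const.
  by apply: Ck_plus.
Qed.

Lemma smooth_ext n (U : Rn n -> Prop) f g :
  is_open U -> (forall x, U x -> f x = g x) -> smooth U f -> smooth U g.
Proof. move=> HU E H k; apply: (@Ck_ext n U k HU f g E); apply: H. Qed.

Lemma smooth_partial n (U : Rn n -> Prop) f i p : is_open U -> smooth U f ->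
  (forall x, U x -> partial f i x (p x)) -> smooth U p.
Proof.
  move=> HU Hf Hp k; have [_ H] := Hf (S k); have [g [Hg1 Hg2]] := H i.
  apply: (@Ck_ext n U k HU g p _ Hg2) => x Ux; apply: (partial_unique (Hg1 x Ux)); by apply: Hp.
Qed.

Lemma smooth_grad n (U : Rn n -> Prop) f : is_open U -> smooth U f ->
  exists g : 'I_n -> Rn n -> R,
    (forall j x, U x -> partial f j x (g j x)) /\ forall j, smooth U (g j).
Proof.
  move=> HU Hf.
  have H : forall j, exists g : Rn n -> R, forall x, U x -> partial f j x (g x).
    move=> j; have [_ H] := Hf 1%nat; have [g [Hg _]] := H j; by exists g.
  pose g := fun j => proj1_sig (constructive_indefinite_description _ (H j)).
  have Hg : forall j x, U x -> partial f j x (g j x).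
    by move=> j; exact: (proj2_sig (constructive_indefinite_description _ (H j))).
  exists g; split => // j; exact: (@smooth_partial n U f j _ HU Hf (Hg j)).
Qed.

Lemma smooth_mult n (U : Rn n -> Prop) f g :
  smooth U f -> smooth U g -> smooth U (fun x => f x * g x).
Proof. move=> Hf Hg k; apply: Ck_mult; [apply: Hf | apply: Hg]. Qed.

Lemma smooth_plus n (U : Rn n -> Prop) f g :
  smooth U f -> smooth U g -> smooth U (fun x => f x + g x).
Proof. move=> Hf Hg k; apply: Ck_plus; [apply: Hf | apply: Hg]. Qed.

Lemma smooth_const n (U : Rn n -> Prop) c : smooth U (fun _ : Rn n => c).
Proof. move=> k; apply: Ck_const. Qed.

Lemma smooth_rsum n (U : Rn n -> Prop) (F : 'I_n -> Rn n -> R) :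
  (forall j, smooth U (F j)) -> smooth U (fun x => rsum (fun j => F j x)).
Proof. move=> H k; apply: Ck_lsum => j; apply: H. Qed.

Lemma smooth_cont n (U : Rn n -> Prop) f : smooth U f -> cont_on U f.
Proof. move=> H; apply: (H 0%nat). Qed.

Lemma lie_iter_smooth n (U : Rn n -> Prop) (X : Rn n -> Rn n) k g h : is_open U ->
  (forall i, smooth U (fun x => X x i)) -> smooth U g -> lie_iter U X k g h -> smooth U h.
Proof.
  move=> HU HX Hg H; elim: H Hg => [g0 Hg0 | k0 g0 h0 p Hl IH Hp Hg0] //.
  have Hh := IH Hg0.
  apply: smooth_rsum => j; apply: smooth_mult; first by apply: HX.
  apply: (@smooth_partial n U h0 j _ HU Hh); apply: Hp.
Qed.


(* Lebesgue-number argument for the cover by the boxes of half the given radii. *)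
Lemma compact_uniform_on_boxes n (K : Rn n -> Prop) (P : R -> Rn n -> Rn n -> Prop) :
  is_compact K -> (forall C C' a b, C <= C' -> P C a b -> P C' a b) ->
  (forall z, K z -> exists d C, 0 < d /\ forall a b, box z d a -> box z d b -> P C a b) ->
  exists r C, 0 < r /\ forall p, K p -> forall a b, box p r a -> box p r b -> P C a b.
Proof.
  move=> HK Hmono Hloc.
  pose J := {z : Rn n & {dc : R * R | K z /\ 0 < dc.1 /\
    forall a b, box z dc.1 a -> box z dc.1 b -> P dc.2 a b}}.
  pose dJ := fun j : J => (proj1_sig (projT2 j)).1.
  pose CJ := fun j : J => (proj1_sig (projT2 j)).2.
  pose O := fun j : J => box (projT1 j) (dJ j / 2).
  have [l Hl] := HK J O ltac:(move=> j; apply: box_open)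
    ltac:(move=> x Kx; have [d [C [Hd HP]]] := Hloc x Kx;
          exists (existT _ x (exist _ (d, C) (conj Kx (conj Hd HP))));
          rewrite /O /dJ /= => j; rewrite Rminus_diag Rabs_R0; lra).
  have HdJ : forall j, 0 < dJ j by move=> j; rewrite /dJ; case: (proj2_sig (projT2 j)) => _ [].
  have Hgen : forall l', 0 < fold_right (fun j acc => Rmin acc (dJ j / 2)) 1 l' /\
      forall j, List.In j l' -> fold_right (fun j acc => Rmin acc (dJ j / 2)) 1 l' <= dJ j / 2 /\
         CJ j <= fold_right (fun j acc => Rmax acc (CJ j)) 0 l'.
    elim => [|j l' [IH1 IH2]] /=; first by split; [lra | done].
    split; first by apply: Rmin_glb_lt => //; have := HdJ j; lra.
    move=> j' [<-|Hj'].
    - split; [apply: Rmin_r | apply: Rmax_r].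
    - have [A B] := IH2 j' Hj'; split.
      + have := Rmin_l (fold_right (fun j0 acc => Rmin acc (dJ j0 / 2)) 1 l') (dJ j / 2); lra.
      + have := Rmax_l (fold_right (fun j0 acc => Rmax acc (CJ j0)) 0 l') (CJ j); lra.
  have [Hr Hr'] := Hgen l.
  set r := fold_right (fun j acc => Rmin acc (dJ j / 2)) 1 l in Hr Hr'.
  set C := fold_right (fun j acc => Rmax acc (CJ j)) 0 l in Hr Hr'.
  exists r, C; split => // p Kp a b Ha Hb.
  have [j [Hjl Hj]] := Hl p Kp.
  have [Hrj HCj] := Hr' j Hjl.
  apply: (Hmono (CJ j)) => //.
  case: (proj2_sig (projT2 j)) => _ [_ HP]. apply: HP => i.
  - have := Ha i; have := Hj i; rewrite /O => H1 H2.
    have := Rabs_triang (a i - p i) (p i - projT1 j i).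
    have -> : a i - p i + (p i - projT1 j i) = a i - projT1 j i by ring.
    rewrite /dJ in Hrj H1; lra.
  - have := Hb i; have := Hj i; rewrite /O => H1 H2.
    have := Rabs_triang (b i - p i) (p i - projT1 j i).
    have -> : b i - p i + (p i - projT1 j i) = b i - projT1 j i by ring.
    rewrite /dJ in Hrj H1; lra.
Qed.

Lemma cont_on_compact_bounded n (U K : Rn n -> Prop) f :
  is_open U -> is_compact K -> (forall x, K x -> U x) -> cont_on U f ->
  exists B, forall x, K x -> Rabs (f x) <= B.
Proof.
  move=> HU HK HKU Hf.
  have [r [C [Hr H]]] := @compact_uniform_on_boxes n K (fun C a b => Rabs (f a) <= C) HK
    ltac:(move=> C C' a b ? ?; lra)
    ltac:(move=> z Kz; have [d [Hd Hd']] := cont_on_box z HU Hf (HKU z Kz) Rlt_0_1;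
          exists d, (Rabs (f z) + 1); split => // a b Ha _; have [_ H1] := Hd' a Ha;
          have := Rabs_triang_inv (f a) (f z); lra).
  by exists C => x Kx; apply: (H x Kx x x); apply: box_center.
Qed.

Lemma compact_cluster_point n (K : Rn n -> Prop) (u : nat -> Rn n) :
  is_compact K -> (forall m, K (u m)) ->
  exists y, K y /\ forall d, 0 < d -> forall N, exists m, (N <= m)%nat /\ box y d (u m).
Proof.
  move=> HK Hu; apply: NNPP => Hno.
  have Hno' : forall y, K y -> exists d N, 0 < d /\ forall m, (N <= m)%nat -> ~ box y d (u m).
    move=> y Ky; apply: NNPP => H1; apply: Hno; exists y; split => // d Hd N.
    apply: NNPP => H2; apply: H1; exists d, N; split => // m Hm Hb.
    by apply: H2; exists m.
  pose J := {y : Rn n & {dN : R * nat | K y /\ 0 < dN.1 /\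
    forall m, (dN.2 <= m)%nat -> ~ box y dN.1 (u m)}}.
  pose O := fun j : J => box (projT1 j) (proj1_sig (projT2 j)).1.
  have [l Hl] := HK J O ltac:(move=> j; apply: box_open)
    ltac:(move=> x Kx; have [d [N [Hd HP]]] := Hno' x Kx;
          exists (existT _ x (exist _ (d, N) (conj Kx (conj Hd HP))));
          rewrite /O /= => j; rewrite Rminus_diag Rabs_R0; lra).
  pose NJ := fun j : J => (proj1_sig (projT2 j)).2.
  pose Nmax := fold_right (fun j acc => maxn acc (NJ j)) 0%nat.
  have Hgen : forall (l' : list J) (j : J), List.In j l' -> (NJ j <= Nmax l')%nat.
    elim => [|j l' IH] j'; first by case.
    case => [<-|Hj']; first by apply: leq_maxr.
    apply: leq_trans (IH j' Hj') _; apply: leq_maxl.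
  pose N := Nmax l.
  have HN := Hgen l.
  have [j [Hjl Hj]] := Hl (u N) (Hu N).
  case: (proj2_sig (projT2 j)) => _ [_ HP].
  by apply: (HP N (HN j Hjl)).
Qed.

(** * Local existence by Picard iteration *)

Lemma pow_small q :
  0 <= q <= 1/2 -> forall e, 0 < e -> exists N, forall m, (N <= m)%nat -> q ^ m < e.
Proof.
  move=> Hq e He.
  have [N HN] := pow_lt_1_zero q ltac:(rewrite Rabs_pos_eq; lra) e He.
  exists N => m Hm; have := HN m ltac:(apply/leP; done).
  rewrite Rabs_pos_eq //; apply: pow_le; lra.
Qed.

Lemma le_of_geometric_slack A B C q :
  0 <= q <= 1/2 -> 0 <= C -> (forall m, A <= B + C * q ^ m) -> A <= B.
Proof.
  move=> Hq HC H; apply: Rnot_lt_le => Hlt.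
  have He : 0 < (A - B) / (C + 1) by apply: Rdiv_lt_0_compat; lra.
  have [N HN] := pow_small Hq He.
  have := HN N (leqnn N); have := H N.
  have Hp : 0 <= q ^ N by apply: pow_le; lra.
  move=> H1 H2.
  have : C * q ^ N <= C * ((A - B) / (C + 1)) by apply: Rmult_le_compat_l; lra.
  have : C * ((A - B) / (C + 1)) < A - B.
    by apply: (Rmult_lt_reg_r (C + 1)); [lra | field_simplify; nra].
  lra.
Qed.

Lemma geometric_increments_bound (u : nat -> R) a q :
  0 <= q <= 1/2 -> 0 <= a -> (forall m, Rabs (u (S m) - u m) <= a * q ^ m) ->
  forall m k, (m <= k)%nat -> Rabs (u k - u m) <= 2 * a * q ^ m.
Proof.
  move=> Hq Ha H.
  have Hk : forall m j, Rabs (u (m + j)%nat - u m) <= 2 * a * q ^ m - 2 * a * q ^ (m + j).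
    move=> m; elim => [|j IH]; first by rewrite addn0 Rminus_diag Rabs_R0; lra.
    rewrite addnS; have := H (m + j)%nat.
    have := Rabs_triang (u (S (m + j)) - u (m + j)%nat) (u (m + j)%nat - u m).
    rewrite (_ : u (S (m + j)) - u (m + j)%nat + (u (m + j)%nat - u m) = u (S (m + j)) - u m);
      last ring.
    change (q ^ (S (m + j))) with (q * q ^ (m + j)).
    have Hp : 0 <= q ^ (m + j) by apply: pow_le; lra.
    have : 0 <= a * q ^ (m + j) * (1 - 2 * q) by apply: Rmult_le_pos; [apply: Rmult_le_pos | lra].
    nra.
  move=> m k Hmk; have := Hk m (k - m)%nat; rewrite subnKC //.
  have : 0 <= q ^ k by apply: pow_le; lra.
  nra.
Qed.

Lemma geometric_cauchy_limit (u : nat -> R) a q :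
  0 <= q <= 1/2 -> 0 <= a -> (forall m, Rabs (u (S m) - u m) <= a * q ^ m) ->
  {l : R | forall m, Rabs (l - u m) <= 2 * a * q ^ m}.
Proof.
  move=> Hq Ha H.
  have Hk := @geometric_increments_bound u a q Hq Ha H.
  have Hc : Cauchy_crit u.
    move=> eps He.
    have He' : 0 < eps / (4 * a + 1) by apply: Rdiv_lt_0_compat; lra.
    have [N HN] := pow_small Hq He'.
    exists N => m k /leP Hm /leP Hk2; rewrite /R_dist.
    have A1 := Hk N m Hm; have A2 := Hk N k Hk2.
    have B : 4 * a * q ^ N < eps.
      have := HN N (leqnn N) => H1.
      have : 4 * a * q ^ N <= 4 * a * (eps / (4 * a + 1)) by apply: Rmult_le_compat_l; lra.
      have : 4 * a * (eps / (4 * a + 1)) < eps.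
        by apply: (Rmult_lt_reg_r (4 * a + 1)); [lra | field_simplify; nra].
      lra.
    have := Rabs_triang (u m - u N) (u N - u k).
    rewrite (_ : u m - u N + (u N - u k) = u m - u k); last ring.
    rewrite (Rabs_minus_sym (u N)); lra.
  have [l Hl] := Rcomplete.R_complete u Hc.
  exists l => m; apply: le_epsilon => e He.
  have [N HN] := Hl e He.
  set k := maxn N m.
  have A1 := HN k ltac:(apply/leP; apply: leq_maxl).
  have A2 := Hk m k (leq_maxr N m).
  rewrite /R_dist Rabs_minus_sym in A1.
  have := Rabs_triang (l - u k) (u k - u m).
  rewrite (_ : l - u k + (u k - u m) = l - u m); last ring.
  lra.
Qed.

Lemma ex_RInt_continuous_all (g : R -> R) :
  (forall u, continuous g u) -> forall a b, ex_RInt g a b.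
Proof. move=> H a b; apply: ex_RInt_continuous => z _; apply: H. Qed.

Lemma abs_RInt_le_const_all (g : R -> R) M a b :
  (forall u, continuous g u) -> (forall u, Rabs (g u) <= M) ->
  Rabs (RInt g a b) <= M * Rabs (b - a).
Proof.
  move=> Hc HM.
  case: (Rle_dec a b) => Hab.
  - rewrite (Rabs_pos_eq (b - a)); last lra.
    rewrite Rmult_comm; apply: abs_RInt_le_const => //.
    exact: ex_RInt_continuous_all.
  - rewrite -(opp_RInt_swap _ _ _ (ex_RInt_continuous_all Hc b a)) /opp /= Rabs_Ropp.
    rewrite (_ : Rabs (b - a) = a - b); last by rewrite Rabs_left; lra.
    rewrite Rmult_comm; apply: abs_RInt_le_const => //; first lra.
    exact: ex_RInt_continuous_all.
Qed.

Lemma RInt_diff (g : R -> R) a b :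
  (forall u, continuous g u) -> RInt g 0 b - RInt g 0 a = RInt g a b.
Proof.
  move=> Hc; rewrite -(RInt_Chasles g 0 a b); try apply: ex_RInt_continuous_all => //.
  rewrite /plus /=; ring.
Qed.

Lemma RInt_sub (g1 g2 : R -> R) a b :
  (forall u, continuous g1 u) -> (forall u, continuous g2 u) ->
  RInt (fun u => g1 u - g2 u) a b = RInt g1 a b - RInt g2 a b.
Proof.
  move=> H1 H2.
  exact: RInt_minus g1 g2 a b (ex_RInt_continuous_all H1 a b) (ex_RInt_continuous_all H2 a b).
Qed.

Lemma cont_on_comp_lipschitz n (U : Rn n -> Prop) f (y : R -> Rn n) M :
  cont_on U f -> (forall u, U (y u)) -> 0 <= M ->
  (forall u u' j, Rabs (y u j - y u' j) <= M * Rabs (u - u')) ->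
  forall u, continuous (fun s => f (y s)) u.
Proof.
  move=> Hf HU HM Hy u.
  apply/filterlim_locally => eps.
  have [d [Hd Hd']] := Hf (y u) (HU u) eps (cond_pos eps).
  have HN := pos_INR n.
  have HK : 0 < INR n * M + 1 by nra.
  have He2 : 0 < d / (INR n * M + 1) by apply: Rdiv_lt_0_compat.
  exists (mkposreal _ He2) => s Hs.
  have Hs' : Rabs (s - u) < d / (INR n * M + 1) by apply: Hs.
  change (Rabs (f (y s) - f (y u)) < eps).
  apply: Hd' => //.
  have := enorm_le_norm1 (vsub (y s) (y u)).
  have : norm1 (vsub (y s) (y u)) <= INR n * (M * Rabs (s - u)).
    apply: rsum_const_le => j; rewrite /vsub; apply: Hy.
  have : (INR n * M + 1) * Rabs (s - u) < d.
    have := Rmult_lt_compat_l _ _ _ HK Hs'.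
    have -> : (INR n * M + 1) * (d / (INR n * M + 1)) = d by field; lra. done.
  have := Rabs_pos (s - u). nra.
Qed.


Section Picard.

Variables (n : nat) (U : Rn n -> Prop) (F : Rn n -> Rn n) (p : Rn n) (r L M h : R).
Hypotheses (Hr : 0 < r) (HL : 0 <= L) (HM : 0 <= M) (Hh : 0 < h).
Hypotheses (HMh : M * h <= r / 2) (Hcontr : INR n * L * h <= 1 / 2).
Hypothesis HUp : forall a, box p r a -> U a.
Hypothesis HFc : forall i, cont_on U (fun x => F x i).
Hypothesis HFL : forall a b i, box p r a -> box p r b ->
  Rabs (F b i - F a i) <= L * norm1 (vsub b a).
Hypothesis HFM : forall a i, box p r a -> Rabs (F a i) <= M.

(* Times are clamped to [0, h] so that every iterate is defined and Lipschitz on all of R. *)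
Fixpoint picard_iter (m : nat) : R -> Rn n :=
  match m with
  | O => fun _ => p
  | S m' => fun s i => p i + RInt (fun u => F (picard_iter m' u) i) 0 (clamp 0 h s)
  end.

Let q := INR n * L * h.

Lemma picard_ratio : 0 <= q <= 1/2.
Proof. split => //; rewrite /q; have := pos_INR n; move=> ?; apply: Rmult_le_pos; nra. Qed.

Lemma clamp_0h s : 0 <= clamp 0 h s <= h.
Proof. apply: clamp_in; lra. Qed.

Lemma box_of_bound a : (forall i, Rabs (a i - p i) <= M * h) -> box p r a.
Proof. by move=> Ha i; have := Ha i; lra. Qed.

Lemma picard_integrand_cont (y : R -> Rn n) i :
  (forall u, box p r (y u)) -> (forall u u' j, Rabs (y u j - y u' j) <= M * Rabs (u - u')) ->
  forall u, continuous (fun u => F (y u) i) u.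
Proof.
  move=> Hy HyL; apply: (@cont_on_comp_lipschitz n U (fun x => F x i) y M (HFc i)) => //.
  by move=> u; apply: HUp.
Qed.

Lemma picard_integral_bounds (y : R -> Rn n) i :
  (forall u, box p r (y u)) -> (forall u u' j, Rabs (y u j - y u' j) <= M * Rabs (u - u')) ->
  (forall s, Rabs (RInt (fun u => F (y u) i) 0 (clamp 0 h s)) <= M * h) /\
  (forall s s', Rabs (RInt (fun u => F (y u) i) 0 (clamp 0 h s) -
                      RInt (fun u => F (y u) i) 0 (clamp 0 h s')) <= M * Rabs (s - s')).
Proof.
  move=> Hy HyL; have Hg := @picard_integrand_cont y i Hy HyL.
  have HgM : forall u, Rabs (F (y u) i) <= M by move=> u; apply: HFM.
  split => [s|s s'].
  - apply: Rle_trans; first exact: abs_RInt_le_const_all Hg HgM.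
    have Hs := clamp_0h s; rewrite Rminus_0_r Rabs_pos_eq; last lra.
    by apply: Rmult_le_compat_l; lra.
  - rewrite (RInt_diff _ _ Hg).
    apply: Rle_trans; first exact: abs_RInt_le_const_all Hg HgM.
    apply: Rmult_le_compat_l => //; exact: clamp_lipschitz.
Qed.

Lemma picard_iter_bounds m :
  (forall s i, Rabs (picard_iter m s i - p i) <= M * h) /\
  (forall s s' i, Rabs (picard_iter m s i - picard_iter m s' i) <= M * Rabs (s - s')).
Proof.
  elim: m => [|m [IH1 IH2]].
  - split => [s i|s s' i]; rewrite /= Rminus_diag Rabs_R0.
    + apply: Rmult_le_pos; lra.
    + apply: Rmult_le_pos => //; apply: Rabs_pos.
  - have Hin : forall u, box p r (picard_iter m u).
      by move=> u; apply: box_of_bound => i; apply: IH1.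
    split => [s i|s s' i] /=; have [B1 B2] := @picard_integral_bounds _ i Hin IH2.
    + by rewrite (_ : forall a b, a + b - a = b); last by move=> ? ?; ring.
    + by rewrite (_ : forall a b c, a + b - (a + c) = b - c); last by move=> ? ? ?; ring.
Qed.

Lemma picard_iter_in_box m u : box p r (picard_iter m u).
Proof. by apply: box_of_bound => i; apply: (proj1 (picard_iter_bounds m)). Qed.

Lemma picard_iter_cont m i u : continuous (fun u => F (picard_iter m u) i) u.
Proof.
  apply: picard_integrand_cont; [exact: picard_iter_in_box | exact: (proj2 (picard_iter_bounds m))].
Qed.

(* q = n L h: the arguments are at l1-distance at most n e, and the time of integration is at
   most h. *)
Lemma picard_integral_contract (y1 y2 : R -> Rn n) e i s :
  (forall u, box p r (y1 u)) -> (forall u, box p r (y2 u)) ->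
  (forall i' u, continuous (fun u => F (y1 u) i') u) ->
  (forall i' u, continuous (fun u => F (y2 u) i') u) ->
  0 <= e -> (forall u j, Rabs (y1 u j - y2 u j) <= e) ->
  Rabs (RInt (fun u => F (y1 u) i) 0 (clamp 0 h s) - RInt (fun u => F (y2 u) i) 0 (clamp 0 h s))
    <= q * e.
Proof.
  move=> B1 B2 C1 C2 He0 He.
  rewrite -RInt_sub; [|exact: C1|exact: C2].
  apply: Rle_trans.
    apply: (@abs_RInt_le_const_all _ (L * (INR n * e))).
    - by move=> u; apply: continuous_minus; [apply: C1 | apply: C2].
    - move=> u; rewrite Rabs_minus_sym; apply: Rle_trans; first exact: HFL.
      by apply: Rmult_le_compat_l => //; apply: norm1_le => j; rewrite Rabs_minus_sym; apply: He.
  have Hs := clamp_0h s; rewrite Rminus_0_r Rabs_pos_eq; last lra.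
  rewrite /q (_ : INR n * L * h * e = L * (INR n * e) * h); last ring.
  apply: Rmult_le_compat_l => //; last lra.
  by apply: Rmult_le_pos => //; apply: Rmult_le_pos => //; apply: pos_INR.
Qed.

Lemma picard_iter_S m s i :
  picard_iter (S m) s i = p i + RInt (fun u => F (picard_iter m u) i) 0 (clamp 0 h s).
Proof. by []. Qed.

Lemma picard_iter_step m s i :
  Rabs (picard_iter (S m) s i - picard_iter m s i) <= M * h * q ^ m.
Proof.
  elim: m s i => [|m IH] s i.
  - rewrite /= Rmult_1_r; exact: (proj1 (picard_iter_bounds 1) s i).
  - rewrite !picard_iter_S (_ : forall a b c, a + b - (a + c) = b - c); last by move=> ? ? ?; ring.
    change (q ^ S m) with (q * q ^ m).
    rewrite (_ : M * h * (q * q ^ m) = q * (M * h * q ^ m)); last ring.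
    apply: picard_integral_contract => //; try exact: picard_iter_in_box;
      try exact: picard_iter_cont; try exact: IH.
    apply: Rmult_le_pos; first by apply: Rmult_le_pos; lra.
    by apply: pow_le; have := picard_ratio; lra.
Qed.

Definition picard_limit (s : R) (i : 'I_n) : R :=
  proj1_sig (@geometric_cauchy_limit (fun m => picard_iter m s i) (M * h) q picard_ratio
    (Rmult_le_pos _ _ HM (Rlt_le _ _ Hh)) (fun m => picard_iter_step m s i)).

Lemma picard_limit_approx s i m :
  Rabs (picard_limit s i - picard_iter m s i) <= 2 * (M * h) * q ^ m.
Proof. exact: (proj2_sig (geometric_cauchy_limit _ _ _ _)). Qed.

Lemma picard_limit_bounds :
  (forall s i, Rabs (picard_limit s i - p i) <= M * h) /\
  (forall s s' i, Rabs (picard_limit s i - picard_limit s' i) <= M * Rabs (s - s')).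
Proof.
  have Hq := picard_ratio.
  split => [s i|s s' i].
  - apply: (@le_of_geometric_slack _ _ (2 * (M * h)) q Hq); first by nra.
    move=> m; have := picard_limit_approx s i m; have := proj1 (picard_iter_bounds m) s i.
    have := Rabs_triang (picard_limit s i - picard_iter m s i) (picard_iter m s i - p i).
    rewrite (_ : forall a b c, a - b + (b - c) = a - c); last by move=> ? ? ?; ring.
    lra.
  - apply: (@le_of_geometric_slack _ _ (4 * (M * h)) q Hq); first by nra.
    move=> m; have := picard_limit_approx s i m; have := picard_limit_approx s' i m.
    have := proj2 (picard_iter_bounds m) s s' i.
    set Y := picard_limit s i; set Y' := picard_limit s' i.
    set P := picard_iter m s i; set P' := picard_iter m s' i.
    have := Rabs_triang (Y - P) (P - P'); have := Rabs_triang (Y - P + (P - P')) (P' - Y').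
    rewrite (_ : Y - P + (P - P') + (P' - Y') = Y - Y'); last ring.
    rewrite (Rabs_minus_sym P'); lra.
Qed.

Lemma picard_limit_in_box u : box p r (picard_limit u).
Proof. by apply: box_of_bound => i; apply: (proj1 picard_limit_bounds). Qed.

Lemma picard_limit_cont i u : continuous (fun u => F (picard_limit u) i) u.
Proof.
  apply: picard_integrand_cont; [exact: picard_limit_in_box | exact: (proj2 picard_limit_bounds)].
Qed.

Lemma picard_limit_0 : picard_limit 0 = p.
Proof.
  apply: functional_extensionality => i.
  have P0 : forall m, picard_iter m 0 i = p i.
    case => [|m] //=; rewrite (@clamp_id 0 h 0); last lra.
    by rewrite RInt_point /zero /=; ring.
  apply: Rminus_diag_uniq; apply: Rabs_eq_0; apply: Rle_antisym; last exact: Rabs_pos.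
  apply: (@le_of_geometric_slack _ _ (2 * (M * h)) q picard_ratio); first by nra.
  by move=> m; have := picard_limit_approx 0 i m; rewrite P0; lra.
Qed.

Lemma picard_limit_fixpoint s i :
  picard_limit s i = p i + RInt (fun u => F (picard_limit u) i) 0 (clamp 0 h s).
Proof.
  have Hq := picard_ratio.
  set RHS := p i + RInt (fun u => F (picard_limit u) i) 0 (clamp 0 h s).
  apply: Rminus_diag_uniq; apply: Rabs_eq_0; apply: Rle_antisym; last exact: Rabs_pos.
  apply: (@le_of_geometric_slack _ _ (4 * (M * h)) q Hq); first by nra.
  move=> m.
  have Hqm : 0 <= q ^ m by apply: pow_le; lra.
  have HMh0 : 0 <= M * h by nra.
  have E1 := picard_limit_approx s i (S m).
  have E2 : Rabs (picard_iter (S m) s i - RHS) <= q * (2 * (M * h) * q ^ m).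
    rewrite /RHS picard_iter_S (_ : forall a b c, a + b - (a + c) = b - c);
      last by move=> ? ? ?; ring.
    apply: picard_integral_contract => //; try exact: picard_iter_in_box;
      try exact: picard_limit_in_box; try exact: picard_iter_cont; try exact: picard_limit_cont.
    - by apply: Rmult_le_pos => //; lra.
    - by move=> u j; rewrite Rabs_minus_sym; apply: picard_limit_approx.
  have := Rabs_triang (picard_limit s i - picard_iter (S m) s i) (picard_iter (S m) s i - RHS).
  rewrite (_ : forall a b c, a - b + (b - c) = a - c); last by move=> ? ? ?; ring.
  change (q ^ S m) with (q * q ^ m) in E1.
  have Hqq : q * q ^ m <= q ^ m.
    by have : q * q ^ m <= 1 * q ^ m; [apply: Rmult_le_compat_r; lra | lra].
  have : q * (2 * (M * h) * q ^ m) <= M * h * q ^ m.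
    have := Rmult_le_pos (1 / 2 - q) (M * h * q ^ m) ltac:(lra) (Rmult_le_pos _ _ HMh0 Hqm).
    lra.
  have : 2 * (M * h) * (q * q ^ m) <= 2 * (M * h) * q ^ m by apply: Rmult_le_compat_l; lra.
  lra.
Qed.

Lemma picard_local_solution : exists y, y 0 = p /\ sol U F (fun s => 0 <= s <= h) y.
Proof.
  exists picard_limit; split; first exact: picard_limit_0.
  move=> t Ht; split; first by apply: HUp; apply: picard_limit_in_box.
  move=> i.
  set Phi := fun s => RInt (fun u => F (picard_limit u) i) 0 s.
  have D : derivable_pt_lim (fun s => p i + Phi s) t (F (picard_limit t) i).
    rewrite -(Rplus_0_l (F _ i)).
    apply: derivable_pt_lim_plus; first exact: derivable_pt_lim_const.
    apply/is_derive_Reals; apply: (is_derive_RInt (fun u => F (picard_limit u) i) Phi 0 t).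
    - apply: filter_forall => b; apply: RInt_correct.
      by apply: ex_RInt_continuous_all; apply: picard_limit_cont.
    - exact: picard_limit_cont.
  apply: (@deriv_in_ext _ (fun s => p i + Phi s)) => //.
  - by move=> s Hs; rewrite picard_limit_fixpoint clamp_id.
  - exact: derivable_deriv_in.
Qed.

End Picard.

(** * Glaeser's inequality *)

Lemma taylor_upper_bound (phi phi1 phi2 : R -> R) a r M :
  0 < r -> 0 <= M ->
  (forall s, a - r <= s <= a + r -> derivable_pt_lim phi s (phi1 s)) ->
  (forall s, a - r <= s <= a + r -> derivable_pt_lim phi1 s (phi2 s)) ->
  (forall s, a - r <= s <= a + r -> Rabs (phi2 s) <= M) ->
  forall s, a - r <= s <= a + r -> phi s <= phi a + phi1 a * (s - a) + M * (s - a) ^ 2.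
Proof.
  move=> Hr HM H1 H2 HB s Hs.
  have Hin : forall c, Rmin a s <= c <= Rmax a s -> a - r <= c <= a + r.
    move=> c; rewrite /Rmin /Rmax; case: Rle_dec => ? ?; lra.
  have [c [Hc Ec]] := @MVT_between phi phi1 a s (fun t Ht => H1 t (Hin t Ht)).
  have Hin2 : forall e, Rmin a c <= e <= Rmax a c -> a - r <= e <= a + r.
    move=> e; have := Hin c Hc; rewrite /Rmin /Rmax; repeat case: Rle_dec => ? ; lra.
  have [e [He Ee]] := @MVT_between phi1 phi2 a c (fun t Ht => H2 t (Hin2 t Ht)).
  have Hbe := HB e (Hin2 e He).
  have E1 : phi s - phi a = phi1 a * (s - a) + phi2 e * (c - a) * (s - a) by rewrite Ec; nra.
  have Hca : Rabs (c - a) <= Rabs (s - a).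
    move: Hc; rewrite /Rmin /Rmax; case: Rle_dec => ? ?; split_Rabs; lra.
  have : phi2 e * (c - a) * (s - a) <= M * (s - a) ^ 2.
    have : Rabs (phi2 e * (c - a) * (s - a)) <= M * (s - a) ^ 2.
      rewrite !Rabs_mult.
      have -> : (s - a) ^ 2 = Rabs (s - a) * Rabs (s - a) by rewrite -pow2_abs; ring.
      have := Rabs_pos (c - a); have := Rabs_pos (s - a); have := Rabs_pos (phi2 e).
      move=> ? ? ?. rewrite Rmult_assoc. apply: Rmult_le_compat => //; try nra.
    move=> H3; have := Rle_abs (phi2 e * (c - a) * (s - a)); lra.
  lra.
Qed.

Section QuadraticMinorant.

Variables (phi : R -> R) (a r K d : R).
Hypotheses (Hr : 0 < r) (HK : 0 < K).
Hypothesis Hquad : forall s, a - r <= s <= a + r -> phi s <= phi a + d * (s - a) + K * (s - a) ^ 2.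
Hypothesis Hpos : forall s, a - r <= s <= a + r -> 0 <= phi s.

(* Evaluate the quadratic bound at its minimiser a - d / (2 K). *)
Lemma quadratic_minorant_interior : Rabs d <= 2 * K * r -> d ^ 2 <= 4 * K * phi a.
Proof.
  move=> Hd; set h := - d / (2 * K).
  have Hh : Rabs h <= r.
    rewrite /h /Rdiv Rabs_mult Rabs_Ropp Rabs_inv (Rabs_pos_eq (2 * K)); last lra.
    apply: (Rmult_le_reg_r (2 * K)); first lra.
    rewrite Rmult_assoc Rinv_l; nra.
  have := @Hquad (a + h) ltac:(split_Rabs; lra); have := @Hpos (a + h) ltac:(split_Rabs; lra).
  rewrite (_ : a + h - a = h); last ring.
  rewrite (_ : d * h = - d ^ 2 / (2 * K)); last by rewrite /h; field; lra.
  rewrite (_ : K * h ^ 2 = d ^ 2 / (4 * K)); last by rewrite /h; field; lra.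
  move=> H1 H2; have H3 : d ^ 2 / (4 * K) <= phi a.
    have : - d ^ 2 / (2 * K) + d ^ 2 / (4 * K) = - (d ^ 2 / (4 * K)) by field; lra.
    lra.
  rewrite (_ : d ^ 2 = d ^ 2 / (4 * K) * (4 * K)); last by field; lra.
  have := Rmult_le_compat_r (4 * K) _ _ ltac:(lra) H3; lra.
Qed.

(* Evaluate the quadratic bound at the endpoint of [a - r, a + r] against the sign of d. *)
Lemma quadratic_minorant_boundary : 2 * K * r < Rabs d -> Rabs d * r <= 2 * phi a.
Proof.
  move=> Hd; set h := if Rle_dec 0 d then - r else r.
  have [Hh1 Hh2] : Rabs h = r /\ d * h = - Rabs d * r.
    rewrite /h; case: Rle_dec => Hd0 /=.
    + by rewrite Rabs_Ropp (Rabs_pos_eq r) ?(Rabs_pos_eq d) //; [split; [done | ring] | lra].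
    + by rewrite (Rabs_pos_eq r) ?(Rabs_left d); [split; [done | ring] | lra | lra].
  have := @Hquad (a + h) ltac:(split_Rabs; lra); have := @Hpos (a + h) ltac:(split_Rabs; lra).
  rewrite (_ : a + h - a = h); last ring.
  rewrite Hh2 (_ : h ^ 2 = r ^ 2); last by rewrite -pow2_abs Hh1.
  have : K * r ^ 2 < Rabs d * r / 2.
    rewrite (_ : K * r ^ 2 = (2 * K * r) * r / 2); last by field.
    have : (2 * K * r) * r < Rabs d * r by apply: Rmult_lt_compat_r.
    lra.
  lra.
Qed.

End QuadraticMinorant.

Lemma glaeser_inequality (phi phi1 phi2 : R -> R) a r M B :
  0 < r -> 0 <= M -> 0 <= B ->
  (forall s, a - r <= s <= a + r -> derivable_pt_lim phi s (phi1 s)) ->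
  (forall s, a - r <= s <= a + r -> derivable_pt_lim phi1 s (phi2 s)) ->
  (forall s, a - r <= s <= a + r -> Rabs (phi2 s) <= M) ->
  (forall s, a - r <= s <= a + r -> 0 <= phi s) ->
  Rabs (phi1 a) <= B ->
  phi1 a ^ 2 <= (4 * (M + 1) + 2 * B / r) * phi a.
Proof.
  move=> Hr HM HB H1 H2 HBd Hpos Ha.
  have T := @taylor_upper_bound phi phi1 phi2 a r (M + 1) Hr ltac:(lra) H1 H2
    ltac:(move=> s Hs; have := HBd s Hs; lra).
  have Hpa : 0 <= phi a by apply: Hpos; lra.
  have HBr : 0 <= 2 * B / r by apply: Rdiv_le_0_compat; lra.
  have HBpa : 0 <= 2 * B / r * phi a by apply: Rmult_le_pos.
  case: (Rle_dec (Rabs (phi1 a)) (2 * (M + 1) * r)) => Hd.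
  - have := @quadratic_minorant_interior phi a r (M + 1) (phi1 a) Hr ltac:(lra) T Hpos Hd; lra.
  - have := @quadratic_minorant_boundary phi a r (M + 1) (phi1 a) Hr T Hpos ltac:(lra) => H5.
    have H6 : Rabs (phi1 a) <= 2 * phi a / r.
      by apply: (Rmult_le_reg_r r) => //; rewrite /Rdiv Rmult_assoc Rinv_l; lra.
    rewrite -pow2_abs /= Rmult_1_r.
    have : Rabs (phi1 a) * Rabs (phi1 a) <= B * (2 * phi a / r).
      by apply: Rmult_le_compat; try apply: Rabs_pos; lra.
    rewrite (_ : B * (2 * phi a / r) = 2 * B / r * phi a); last by field; lra.
    have : 0 <= 4 * (M + 1) * phi a by apply: Rmult_le_pos; lra.
    nra.
Qed.

(** * Limits at infinity *)

Definition tends0 (u : R -> R) : Prop :=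
  forall eps, 0 < eps -> exists T, forall t, T <= t -> Rabs (u t) < eps.
Definition halfline := fun t : R => 0 <= t.

Lemma halfline_interval : is_interval halfline.
Proof. move=> s t u Hs Hu ? ?; rewrite /halfline in Hs Hu *; lra. Qed.

(* If |g t| >= eps for a large t, then g + e stays above eps/4 in absolute value on [t, t + d]
   by the Lipschitz bound, so f moves by at least eps d / 4 there, which f -> 0 forbids. *)
Lemma barbalat (f g e : R -> R) L :
  (forall t, halfline t -> deriv_in halfline f t (g t + e t)) -> tends0 f -> tends0 e ->
  (forall a b, halfline a -> halfline b -> Rabs (g b - g a) <= L * Rabs (b - a)) -> tends0 g.
Proof.
  move=> Hd Hf He Hg eps Heps.
  set L' := Rabs L + 1.
  have HL' : 0 < L' by rewrite /L'; have := Rabs_pos L; lra.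
  have Hg' : forall a b, halfline a -> halfline b -> Rabs (g b - g a) <= L' * Rabs (b - a).
    move=> a b Ia Ib; apply: Rle_trans (Hg a b Ia Ib) _.
    by apply: Rmult_le_compat_r; [apply: Rabs_pos | rewrite /L'; have := Rle_abs L; lra].
  set d := eps / (2 * L').
  have Hd0 : 0 < d by rewrite /d; apply: Rdiv_lt_0_compat; lra.
  have [T1 H1] := He (eps / 4) ltac:(lra).
  have [T2 H2] := Hf (d * eps / 10) ltac:(apply: Rdiv_lt_0_compat; [nra | lra]).
  exists (Rmax 0 (Rmax T1 T2)) => t Ht.
  have := Rmax_l 0 (Rmax T1 T2); have := Rmax_r 0 (Rmax T1 T2);
  have := Rmax_l T1 T2; have := Rmax_r T1 T2. move=> ? ? ? ?.
  apply: Rnot_le_lt => Hge.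
  have It : halfline t by rewrite /halfline; lra.
  have Itd : halfline (t + d) by rewrite /halfline; lra.
  have [c [Hc Ec]] := @MVT_deriv_in halfline f (fun s => g s + e s) t (t + d) halfline_interval
    It Itd ltac:(lra) Hd.
  have Ic : halfline c by rewrite /halfline; lra.
  have Hgc : Rabs (g c - g t) <= eps / 2.
    apply: Rle_trans (Hg' t c It Ic) _.
    have : Rabs (c - t) <= d by split_Rabs; lra.
    move=> A; apply: Rle_trans (Rmult_le_compat_l _ _ _ (Rlt_le _ _ HL') A) _.
    rewrite /d; apply: Req_le; field; lra.
  have Hec := H1 c ltac:(lra).
  have Hft := H2 t ltac:(lra). have Hftd := H2 (t + d) ltac:(lra).
  have Hsum : eps / 4 <= Rabs (g c + e c).
    have := Rabs_triang (g c + e c) (- (g c - g t + e c)).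
    rewrite Rabs_Ropp.
    have -> : g c + e c + - (g c - g t + e c) = g t by ring.
    have := Rabs_triang (g c - g t) (e c). lra.
  have : Rabs (f (t + d) - f t) = Rabs (g c + e c) * d.
    rewrite Ec Rabs_mult; have -> : t + d - t = d by ring. rewrite (Rabs_pos_eq d) //; lra.
  have := Rabs_triang (f (t + d)) (- f t). rewrite Rabs_Ropp.
  have : eps / 4 * d <= Rabs (g c + e c) * d by apply: Rmult_le_compat_r; lra.
  move=> A B C.
  have : d * eps / 10 + d * eps / 10 < eps / 4 * d by nra.
  have E : f (t + d) + - f t = f (t + d) - f t by ring.
  rewrite E in B. lra.
Qed.

Lemma tends0_ext (u v : R -> R) : (forall t, halfline t -> u t = v t) -> tends0 u -> tends0 v.
Proof.
  move=> E H eps He; have [T HT] := H eps He; exists (Rmax 0 T) => t Ht.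
  rewrite -E; [apply: HT; have := Rmax_r 0 T; lra | rewrite /halfline; have := Rmax_l 0 T; lra].
Qed.

Lemma tends0_bnd_mult (a b : R -> R) B : (forall t, halfline t -> Rabs (a t) <= B) -> tends0 b ->
  tends0 (fun t => a t * b t).
Proof.
  move=> HB Hb eps He.
  set B' := Rabs B + 1.
  have HB' : 0 < B' by rewrite /B'; have := Rabs_pos B; lra.
  have [T HT] := Hb (eps / B') ltac:(apply: Rdiv_lt_0_compat; lra).
  exists (Rmax 0 T) => t Ht.
  have := Rmax_l 0 T; have := Rmax_r 0 T; move=> ? ?.
  rewrite Rabs_mult.
  have A1 : Rabs (a t) <= B'.
    by rewrite /B'; have := HB t ltac:(rewrite /halfline; lra); have := Rle_abs B; lra.
  have A2 := HT t ltac:(lra).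
  have : Rabs (a t) * Rabs (b t) <= B' * Rabs (b t).
    by apply: Rmult_le_compat_r; [apply: Rabs_pos | done].
  have : B' * Rabs (b t) < B' * (eps / B') by apply: Rmult_lt_compat_l.
  have -> : B' * (eps / B') = eps by field; lra.
  lra.
Qed.

Lemma tends0_plus (u v : R -> R) : tends0 u -> tends0 v -> tends0 (fun t => u t + v t).
Proof.
  move=> Hu Hv eps He.
  have [T1 H1] := Hu (eps / 2) ltac:(lra); have [T2 H2] := Hv (eps / 2) ltac:(lra).
  exists (Rmax T1 T2) => t Ht.
  have := H1 t ltac:(have := Rmax_l T1 T2; lra); have := H2 t ltac:(have := Rmax_r T1 T2; lra).
  have := Rabs_triang (u t) (v t). lra.
Qed.

Lemma tends0_rsum n (u : 'I_n -> R -> R) :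
  (forall j, tends0 (u j)) -> tends0 (fun t => rsum (fun j => u j t)).
Proof.
  move=> H; rewrite /rsum.
  elim: (enum 'I_n) => [|a l IH] /=.
  - move=> eps He; exists 0 => t _; rewrite Rabs_R0; lra.
  - exact: (tends0_plus (H a) IH).
Qed.

Lemma tends0_sq (u : R -> R) : tends0 (fun t => u t ^ 2) -> tends0 u.
Proof.
  move=> H eps He; have [T HT] := H (eps ^ 2) ltac:(nra).
  exists T => t Ht; have := HT t Ht.
  rewrite Rabs_pos_eq; last by apply: pow2_ge_0.
  move=> A; apply: Rnot_le_lt => B.
  have : eps ^ 2 <= Rabs (u t) ^ 2 by apply: pow_incr; lra.
  rewrite pow2_abs. lra.
Qed.

Lemma tends0_le (u v : R -> R) :
  (forall t, halfline t -> Rabs (u t) <= Rabs (v t)) -> tends0 v -> tends0 u.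
Proof.
  move=> Hle Hv eps He; have [T HT] := Hv eps He; exists (Rmax 0 T) => t Ht.
  have := Hle t ltac:(rewrite /halfline; have := Rmax_l 0 T; lra).
  have := HT t ltac:(have := Rmax_r 0 T; lra).
  lra.
Qed.


Lemma nonincreasing_bounded_tends (f : R -> R) B :
  (forall a b, halfline a -> a <= b -> f b <= f a) -> (forall t, halfline t -> B <= f t) ->
  exists l, tends0 (fun t => f t - l).
Proof.
  move=> Hdec HB.
  pose E := fun u => exists t, halfline t /\ u = - f t.
  have Eb : bound E by exists (- B) => u [t [It ->]]; have := HB t It; lra.
  have Ene : exists u, E u by exists (- f 0); exists 0; split => //; rewrite /halfline; lra.
  have [m [Hm1 Hm2]] := completeness E Eb Ene.
  exists (- m) => eps He.
  have [T [IT HT]] : exists T, halfline T /\ f T < - m + eps.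
    apply: NNPP => Hno.
    have : m <= m - eps.
      apply: Hm2 => u [t [It ->]]; apply: Rnot_lt_le => Hlt; apply: Hno.
      by exists t; split => //; lra.
    lra.
  exists T => t Ht.
  have It : halfline t by rewrite /halfline in IT *; lra.
  have := Hdec T t IT Ht; have : - f t <= m by apply: Hm1; exists t.
  move=> ? ?; rewrite Rabs_pos_eq; lra.
Qed.

(** * Global solutions *)

Lemma Int_part_div_unique h m t : 0 < h -> INR m * h <= t < (INR m + 1) * h ->
  Z.to_nat (Int_part (t / h)) = m.
Proof.
  move=> Hh [H1 H2].
  have [B1 B2] := base_Int_part (t / h).
  have A1 : INR m <= t / h.
    by apply: (Rmult_le_reg_r h) => //; rewrite /Rdiv Rmult_assoc Rinv_l; lra.
  have A2 : t / h < INR m + 1.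
    by apply: (Rmult_lt_reg_r h) => //; rewrite /Rdiv Rmult_assoc Rinv_l; lra.
  rewrite INR_IZR_INZ in A1 A2.
  have Z1 : (Int_part (t / h) < Z.of_nat m + 1)%Z.
    apply: lt_IZR; rewrite plus_IZR; lra.
  have Z2 : (Z.of_nat m < Int_part (t / h) + 1)%Z.
    apply: lt_IZR; rewrite plus_IZR; lra.
  have -> : Int_part (t / h) = Z.of_nat m by lia.
  by rewrite Nat2Z.id.
Qed.

Lemma Int_part_div_spec h t : 0 < h -> 0 <= t ->
  INR (Z.to_nat (Int_part (t / h))) * h <= t < (INR (Z.to_nat (Int_part (t / h))) + 1) * h.
Proof.
  move=> Hh Ht.
  have [B1 B2] := base_Int_part (t / h).
  have Hth : 0 <= t / h by apply: Rdiv_le_0_compat.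
  have Z0 : (0 <= Int_part (t / h))%Z.
    have : (-1 < Int_part (t / h))%Z by apply: lt_IZR; lra.
    lia.
  rewrite INR_IZR_INZ Z2Nat.id //.
  split.
  - have := Rmult_le_compat_r h _ _ (Rlt_le _ _ Hh) B1. rewrite /Rdiv Rmult_assoc Rinv_l; lra.
  - have : t / h < IZR (Int_part (t / h)) + 1 by lra.
    move=> H1; have := Rmult_lt_compat_r h _ _ Hh H1. rewrite /Rdiv Rmult_assoc Rinv_l; lra.
Qed.


(* Piece m is used on [m h, (m + 1) h], selected by the integer part of t / h. *)
Lemma sol_glue n (U : Rn n -> Prop) (F : Rn n -> Rn n) h (y : nat -> R -> Rn n) :
  0 < h -> (forall m, sol U F (fun s => 0 <= s <= h) (y m)) -> (forall m, y (S m) 0 = y m h) ->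
  exists x, sol U F halfline x /\ x 0 = y 0%nat 0.
Proof.
  move=> Hh Hy Hjoin.
  pose mt := fun t => Z.to_nat (Int_part (t / h)).
  pose x := fun t => y (mt t) (t - INR (mt t) * h).
  have Piece : forall m s, INR m * h <= s <= (INR m + 1) * h -> x s = y m (s - INR m * h).
    move=> m s Hs.
    case: (Rlt_le_dec s ((INR m + 1) * h)) => Hs2.
    - by rewrite /x /mt (@Int_part_div_unique h m s) //; lra.
    - have Hm1 : mt s = S m.
        rewrite /mt (@Int_part_div_unique h (S m) s) // S_INR; split; [lra|].
        have : (INR m + 1) * h < (INR m + 1 + 1) * h by apply: Rmult_lt_compat_r; lra.
        lra.
      rewrite /x Hm1 S_INR (_ : s - (INR m + 1) * h = 0); last lra.
      by rewrite (_ : s - INR m * h = h) ?Hjoin //; lra.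
  have PD : forall m t i, INR m * h <= t <= (INR m + 1) * h ->
      deriv_in (fun s => INR m * h <= s <= (INR m + 1) * h) (fun s => x s i) t (F (x t) i).
    move=> m t i Ht.
    have [_ Hd] := Hy m (t - INR m * h) ltac:(lra).
    have D1 := @deriv_in_shift _ _ _ _ (INR m * h) (Hd i).
    rewrite (_ : t - INR m * h + INR m * h = t) -?(Piece m t Ht) in D1; last ring.
    apply: (@deriv_in_ext _ (fun s => y m (s - INR m * h) i)) => //.
    - by move=> s Hs; rewrite (Piece m s Hs).
    - by apply: deriv_in_restrict D1; exists 1; split; [lra | move=> s Hs _; lra].
  exists x; split; last first.
    have E0 : mt 0 = 0%nat by rewrite /mt (@Int_part_div_unique h 0 0) //=; lra.
    by rewrite /x E0 /= Rmult_0_l Rminus_0_r.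
  move=> t Ht; set m := mt t.
  have Hm : INR m * h <= t < (INR m + 1) * h by apply: Int_part_div_spec.
  split.
    by rewrite (Piece m t ltac:(lra)); have [] := Hy m (t - INR m * h) ltac:(lra).
  move=> i.
  case: (Rle_lt_or_eq_dec (INR m * h) t (proj1 Hm)) => Hlt.
  - apply: deriv_in_restrict (PD m t i ltac:(lra)).
    exists (Rmin (t - INR m * h) ((INR m + 1) * h - t)); split; first by apply: Rmin_glb_lt; lra.
    move=> s _ Hs; have := Rmin_l (t - INR m * h) ((INR m + 1) * h - t).
    have := Rmin_r (t - INR m * h) ((INR m + 1) * h - t); split_Rabs; lra.
  - case Em : m Hm Hlt => [|k] Hm Hlt.
    + apply: deriv_in_restrict (PD 0%nat t i ltac:(rewrite /= in Hm *; lra)).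
      exists h; split => // s Hs Hs'; rewrite /halfline /= in Hs Hs' Hlt *; split_Rabs; lra.
    + rewrite S_INR in Hm Hlt.
      apply: (@deriv_in_union _ (fun s => INR k * h <= s <= (INR k + 1) * h)
                (fun s => INR (S k) * h <= s <= (INR (S k) + 1) * h)).
      * by exists h; split => // s Hs Hs'; rewrite S_INR; split_Rabs; lra.
      * by apply: PD; have := pos_INR k; lra.
      * by apply: PD; rewrite S_INR; lra.
Qed.

Lemma sol_chain_rule n (U : Rn n -> Prop) (F : Rn n -> Rn n) f (g : 'I_n -> Rn n -> R) I x t :
  is_open U -> (forall j y, U y -> partial f j y (g j y)) -> (forall j, cont_on U (g j)) ->
  sol U F I x -> I t -> deriv_in I (fun s => f (x s)) t (rsum (fun j => g j (x t) * F (x t) j)).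
Proof.
  move=> HU Hf Hg Hs It; have [Ux Hd] := Hs t It.
  exact: (@chain_rule_deriv_in n U f g x (F (x t)) I t HU Hf Hg Ux Hd).
Qed.

(** * Backward uniqueness of zeros *)

(* W e^(C s) is nondecreasing on [a, b]. *)
Lemma deriv_in_gronwall_zero (J : R -> Prop) W G C a b :
  is_interval J -> J a -> J b -> a <= b -> (forall s, J s -> deriv_in J W s (- G s)) ->
  (forall s, J s -> G s <= C * W s) -> (forall s, J s -> 0 <= W s) -> W b = 0 -> W a = 0.
Proof.
  move=> HJ Ja Jb Hab dW HG Wpos Wb.
  have dQ : forall s, J s -> deriv_in J (fun s => W s * exp (C * s)) s
      (- G s * exp (C * s) + W s * (C * exp (C * s))).
    move=> s Js; apply: deriv_in_mult => //; first exact: dW.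
    apply: derivable_deriv_in; apply/is_derive_Reals; auto_derive; [done | ring].
  have := @deriv_in_nonneg_nondecreasing J _ _ a b HJ Ja Jb Hab dQ.
  rewrite Wb Rmult_0_l => HQ.
  have Hea := exp_pos (C * a).
  have : W a * exp (C * a) <= 0.
    apply: HQ => s Js; have := HG s Js; have := exp_pos (C * s); nra.
  have := Wpos a Ja; nra.
Qed.

(* Continuous induction downwards from 0, run on the infimum of the zeros of W in [t, 0]. *)
Lemma zero_propagates_backward (W : R -> R) t :
  t <= 0 -> W 0 = 0 -> (forall s, t <= s <= 0 -> 0 <= W s) ->
  (forall s, t <= s <= 0 -> exists d K, 0 < d /\ 0 < K /\
     forall u, t <= u <= 0 -> Rabs (u - s) < d -> Rabs (W u - W s) <= K * Rabs (u - s)) ->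
  (forall T, t < T <= 0 -> W T = 0 -> exists T', t <= T' < T /\ W T' = 0) ->
  W t = 0.
Proof.
  move=> Ht W0 Wpos Wlip Hstep.
  pose E := fun u => t <= - u <= 0 /\ W (- u) = 0.
  have Eb : bound E by exists (- t) => u [[A B] _]; lra.
  have Ene : exists u, E u by exists 0; rewrite /E Ropp_0; split; [lra | done].
  have [m [Hm1 Hm2]] := completeness E Eb Ene.
  set T := - m.
  have Hlow : forall s, t <= s <= 0 -> W s = 0 -> T <= s.
    move=> s Hs1 Hs2; have : E (- s) by rewrite /E Ropp_involutive.
    by move=> /Hm1; rewrite /T; lra.
  have HT0 : T <= 0 by apply: Hlow; [lra | done].
  have HTt : t <= T.
    have : m <= - t by apply: Hm2 => u [[A B] _]; lra.
    rewrite /T; lra.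
  have Happ : forall eps, 0 < eps -> exists s, t <= s <= 0 /\ W s = 0 /\ s < T + eps.
    move=> eps He; apply: NNPP => Hno.
    have : m <= m - eps.
      apply: Hm2 => u [Hu1 Hu2]; apply: Rnot_lt_le => Hlt; apply: Hno.
      by exists (- u); split; [done | split; [done | rewrite /T; lra]].
    lra.
  have WT : W T = 0.
    apply: Rle_antisym; last by apply: Wpos; lra.
    have [dd [K [Hdd [HK HKl]]]] := Wlip T ltac:(lra).
    apply: le_epsilon => e He.
    have Hee : 0 < Rmin dd (e / K) by apply: Rmin_glb_lt => //; apply: Rdiv_lt_0_compat.
    have [s [Hs1 [Hs2 Hs3]]] := Happ _ Hee.
    have HsT : T <= s by apply: Hlow.
    have := HKl s Hs1 ltac:(have := Rmin_l dd (e / K); split_Rabs; lra).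
    rewrite Hs2.
    have : K * Rabs (s - T) <= K * (e / K).
      by apply: Rmult_le_compat_l; [lra | have := Rmin_r dd (e / K); split_Rabs; lra].
    rewrite (_ : K * (e / K) = e); last by field; lra.
    by move=> A B; have := Rabs_pos (0 - W T); split_Rabs; lra.
  case: (Req_dec T t) => [<- //|HTe].
  have [T' [HT' WT']] := Hstep T ltac:(lra) WT.
  have := Hlow T' ltac:(lra) WT'; lra.
Qed.

(** * The flow of X - grad V *)

Section GradientPerturbedFlow.

Variables (n : nat) (U : Rn n -> Prop) (X : Rn n -> Rn n) (V : Rn n -> R).
Variables (gradV : 'I_n -> Rn n -> R) (c : R).
Hypothesis hU : is_open U.
Hypothesis hX : forall i, smooth U (fun x => X x i).
Hypothesis hV : smooth U V.
Hypothesis hgrad : forall i x, U x -> partial V i x (gradV i x).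
Hypothesis hA1a : forall x, U x -> 0 <= V x.
Hypothesis hA1c : forall x, U x -> rsum (fun i => gradV i x * X x i) = 0.
Hypothesis hA2 : is_compact (fun x => U x /\ 0 <= V x <= c).
Hypothesis hA3 : forall x, Sset U X V x -> (U x /\ 0 <= V x <= c) -> V x = 0.

Let K := fun x => U x /\ 0 <= V x <= c.
Let Z := fun x => U x /\ V x = 0.

Definition flow : Rn n -> Rn n := fun x i => X x i - gradV i x.

Lemma gradV_smooth j : smooth U (gradV j).
Proof. by apply: (@smooth_partial n U V j _ hU hV) => x Ux; apply: hgrad. Qed.

Lemma gradV_cont j : cont_on U (gradV j).
Proof. exact: smooth_cont (gradV_smooth j). Qed.

Lemma flow_smooth i : smooth U (fun x => flow x i).
Proof.
  rewrite /flow (_ : (fun x => X x i - gradV i x) = (fun x => X x i + (-1) * gradV i x)).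
    apply: smooth_plus; first exact: hX.
    by apply: smooth_mult; [apply: smooth_const | apply: gradV_smooth].
  by apply: functional_extensionality => x; ring.
Qed.

Lemma V_deriv_flow I x t : sol U flow I x -> I t ->
  deriv_in I (fun s => V (x s)) t (- rsum (fun j => gradV j (x t) ^ 2)).
Proof.
  move=> Hs It; have [Ux _] := Hs t It.
  have := @sol_chain_rule n U _ V gradV I x t hU hgrad gradV_cont Hs It.
  suff -> : rsum (fun j => gradV j (x t) * flow (x t) j) = - rsum (fun j => gradV j (x t) ^ 2).
    by [].
  rewrite /flow (@rsum_ext n _ (fun j => gradV j (x t) * X (x t) j - gradV j (x t) ^ 2)).
    by rewrite rsum_minus hA1c //; ring.
  by move=> j; ring.
Qed.

Lemma V_deriv_X I x t : sol U X I x -> I t -> deriv_in I (fun s => V (x s)) t 0.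
Proof.
  move=> Hs It; have [Ux _] := Hs t It.
  by have := @sol_chain_rule n U _ V gradV I x t hU hgrad gradV_cont Hs It; rewrite hA1c.
Qed.

Lemma V_nonincreasing_flow I x a b :
  is_interval I -> sol U flow I x -> I a -> I b -> a <= b -> V (x b) <= V (x a).
Proof.
  move=> HI Hs Ia Ib Hab.
  apply: (@deriv_in_nonpos_nonincreasing I (fun s => V (x s))
    (fun t => - rsum (fun j => gradV j (x t) ^ 2))
    a b HI Ia Ib Hab); first by move=> t It; exact: V_deriv_flow.
  move=> t It; have : 0 <= rsum (fun j => gradV j (x t) ^ 2) by apply: rsum_nonneg => j; nra.
  lra.
Qed.

Lemma K_forward_invariant I x :
  is_interval I -> I 0 -> (forall t, I t -> 0 <= t) -> sol U flow I x ->
  K (x 0) -> forall t, I t -> K (x t).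
Proof.
  move=> HI I0 Hpos Hs [U0 [V0 Vc]] t It.
  have [Ut _] := Hs t It.
  have := @V_nonincreasing_flow I x 0 t HI Hs I0 It (Hpos t It).
  by have := hA1a Ut; split => //; lra.
Qed.

Lemma zero_set_invariant_X : invariant_set U X Z.
Proof.
  move=> I x HI I0 Hs [U0 V0] t It.
  have [Ut _] := Hs t It; split => //.
  have := @deriv_in_bounded_lipschitz I (fun s => V (x s)) (fun _ => 0) 0 t 0 HI I0 It
    (fun s Is => @V_deriv_X I x s Hs Is) ltac:(move=> s _; rewrite Rabs_R0; lra).
  rewrite V0 Rmult_0_l => H1; have := Rabs_pos (V (x t) - 0); split_Rabs; lra.
Qed.

Definition flow_bounds (C : R) (a b : Rn n) : Prop :=
  U a /\ forall i, Rabs (flow b i - flow a i) <= C * norm1 (vsub b a) /\ Rabs (flow a i) <= C.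

Lemma flow_bounds_mono C C' a b : C <= C' -> flow_bounds C a b -> flow_bounds C' a b.
Proof.
  move=> HC [Ua Hi]; split => // i; have [A B] := Hi i; split; last lra.
  apply: Rle_trans A _; apply: Rmult_le_compat_r => //; apply: norm1_ge0.
Qed.

Lemma flow_coord_local_bounds z i : U z ->
  exists r C, 0 < r /\ forall a b, box z r a -> box z r b ->
  U a /\ Rabs (flow b i - flow a i) <= C * norm1 (vsub b a) /\ Rabs (flow a i) <= C.
Proof.
  move=> Uz.
  have [g [Hg1 Hg2]] := smooth_grad hU (flow_smooth i).
  have [r1 [Hr1 [HU1 Hfo]]] := @box_first_order n U (fun x => flow x i) g z hU Hg1
    (fun j => smooth_cont (Hg2 j)) Uz 1 Rlt_0_1.
  have [r2 [Hr2 Hc2]] := cont_on_box z hU (smooth_cont (flow_smooth i)) Uz Rlt_0_1.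
  set A := rsum (fun j => Rabs (g j z)).
  have HA : 0 <= A by apply: rsum_nonneg => j; apply: Rabs_pos.
  exists (Rmin r1 r2), (A + 1 + Rabs (flow z i) + 1); split; first by apply: Rmin_glb_lt.
  move=> a b Ha Hb.
  have Ha1 := box_shrink (Rmin_l r1 r2) Ha; have Hb1 := box_shrink (Rmin_l r1 r2) Hb.
  split; first exact: HU1.
  have [_ Hfa] := Hc2 a (box_shrink (Rmin_r r1 r2) Ha).
  have Hfz := Rabs_pos (flow z i).
  split; last by have := Rabs_triang_inv (flow a i) (flow z i); lra.
  have Hs := Hfo a b Ha1 Hb1.
  have Hsp := rsum_mult_le (fun j => g j z) (fun j => b j - a j).
  have HB := norm1_ge0 (vsub b a).
  set S := rsum (fun j => g j z * (b j - a j)) in Hs Hsp.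
  have := Rabs_triang (flow b i - flow a i - S) S.
  rewrite (_ : flow b i - flow a i - S + S = flow b i - flow a i); last ring.
  rewrite /norm1 /vsub in Hsp HB Hs *; rewrite -/A in Hsp.
  set B := rsum (fun j => Rabs (b j - a j)) in Hsp HB Hs *.
  nra.
Qed.

Lemma flow_local_bounds z : U z ->
  exists r C, 0 < r /\ forall a b, box z r a -> box z r b -> flow_bounds C a b.
Proof.
  move=> Uz.
  have [r [C [Hr HP]]] := @ex_radius_bound_all_coords n (fun i r C => forall a b,
      box z r a -> box z r b ->
      U a /\ Rabs (flow b i - flow a i) <= C * norm1 (vsub b a) /\ Rabs (flow a i) <= C)
    ltac:(move=> j r r' C C' Hr' HC HP a b Ha Hb;
          have [A [B D]] := HP a b (box_shrink (proj2 Hr') Ha) (box_shrink (proj2 Hr') Hb);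
          split => //; split; last lra;
          apply: Rle_trans B _; apply: Rmult_le_compat_r => //; apply: norm1_ge0)
    (fun i => flow_coord_local_bounds i Uz).
  have [r0 [Hr0 HU0]] := open_has_box z hU Uz.
  exists (Rmin r r0), C; split; first by apply: Rmin_glb_lt.
  move=> a b Ha Hb; split; first by apply: HU0; apply: box_shrink Ha; apply: Rmin_r.
  move=> i; have [_ H] := HP i a b (box_shrink (Rmin_l r r0) Ha) (box_shrink (Rmin_l r r0) Hb).
  exact: H.
Qed.

Lemma flow_uniform_bounds : exists r C, 0 < r /\
  forall p, K p -> forall a b, box p r a -> box p r b -> flow_bounds C a b.
Proof.
  apply: (@compact_uniform_on_boxes n K flow_bounds hA2) => [C C' a b|z [Uz _]].
  - exact: flow_bounds_mono.
  - exact: flow_local_bounds.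
Qed.

(* The step size h is chosen so that the solution stays in the box of radius r (M h <= r / 2)
   and the Picard operator contracts by 1/2. *)
Lemma flow_local_existence : exists h, 0 < h /\
  forall p, K p -> exists y, y 0 = p /\ sol U flow (fun s => 0 <= s <= h) y.
Proof.
  have [r [C [Hr HD]]] := flow_uniform_bounds.
  set M := Rabs C.
  have HM : 0 <= M by apply: Rabs_pos.
  have HN := pos_INR n.
  have HnM : 0 <= INR n * M by apply: Rmult_le_pos.
  set h := Rmin (r / (2 * (M + 1))) (1 / (2 * (INR n * M + 1))).
  have Hh : 0 < h by apply: Rmin_glb_lt; apply: Rdiv_lt_0_compat; lra.
  exists h; split => // p Kp.
  apply: (@picard_local_solution n U flow p r M M h) => //.
  - have : M * h <= M * (r / (2 * (M + 1))) by apply: Rmult_le_compat_l => //; apply: Rmin_l.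
    have : M * (r / (2 * (M + 1))) <= r / 2.
      by apply: (Rmult_le_reg_r (2 * (M + 1))); [lra | field_simplify; nra].
    lra.
  - have : INR n * M * h <= INR n * M * (1 / (2 * (INR n * M + 1))).
      by apply: Rmult_le_compat_l => //; apply: Rmin_r.
    have : INR n * M * (1 / (2 * (INR n * M + 1))) <= 1 / 2.
      by apply: (Rmult_le_reg_r (2 * (INR n * M + 1))); [lra | field_simplify; nra].
    lra.
  - by move=> a Ha; have [] := HD p Kp a a Ha Ha.
  - by move=> i; apply: smooth_cont; exact: flow_smooth.
  - move=> a b i Ha Hb; have [_ Hi] := HD p Kp a b Ha Hb; have [A _] := Hi i.
    apply: Rle_trans A _; apply: Rmult_le_compat_r; [apply: norm1_ge0 | apply: Rle_abs].
  - move=> a i Ha; have [_ Hi] := HD p Kp a a Ha Ha; have [_ B] := Hi i.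
    exact: Rle_trans B (Rle_abs _).
Qed.

(* Restarting from the endpoint works because K is forward invariant, so the uniform step h can
   be iterated. *)
Lemma flow_global_existence x0 : K x0 -> exists x, sol U flow halfline x /\ x 0 = x0.
Proof.
  move=> Kx0.
  have [h [Hh Hloc]] := flow_local_existence.
  have E : forall p, exists y, K p -> y 0 = p /\ sol U flow (fun s => 0 <= s <= h) y.
    move=> p; case: (classic (K p)) => Kp; last by exists (fun _ => p).
    by have [y Hy] := Hloc p Kp; exists y.
  pose Phi := fun p => proj1_sig (constructive_indefinite_description _ (E p)).
  have PhiP : forall p, K p -> Phi p 0 = p /\ sol U flow (fun s => 0 <= s <= h) (Phi p).
    by move=> p; exact: (proj2_sig (constructive_indefinite_description _ (E p))).
  have PhiK : forall p, K p -> K (Phi p h).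
    move=> p Kp; have [P0 Ps] := PhiP p Kp.
    apply: (@K_forward_invariant (fun s => 0 <= s <= h) (Phi p)) => //; try lra.
    - by move=> s t u Hs Hu ? ?; lra.
    - by move=> t Ht; lra.
    - by rewrite P0.
  pose pts := fix pts (m : nat) : Rn n := if m is S m' then Phi (pts m') h else x0.
  have Kpts : forall m, K (pts m) by elim => [|m IH] //=; apply: PhiK.
  have [x [Hx Hx0]] := @sol_glue n U flow h (fun m => Phi (pts m)) Hh
    (fun m => proj2 (PhiP _ (Kpts m))) (fun m => proj1 (PhiP _ (Kpts (S m)))).
  by exists x; split => //; rewrite Hx0; exact: (proj1 (PhiP _ Kx0)).
Qed.

Lemma gradV_coord_sq_le_V_near z j : U z ->
  exists r C, 0 < r /\ forall y, box z r y -> U y /\ gradV j y ^ 2 <= C * V y.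
Proof.
  move=> Uz.
  have [g [Hg1 Hg2]] := smooth_grad hU (gradV_smooth j).
  have [r1 [Hr1 H1]] := cont_on_box z hU (gradV_cont j) Uz Rlt_0_1.
  have [r2 [Hr2 H2]] := cont_on_box z hU (smooth_cont (Hg2 j)) Uz Rlt_0_1.
  set r0 := Rmin r1 r2.
  have Hr0 : 0 < r0 by apply: Rmin_glb_lt.
  set M := Rabs (g j z) + 1; set B := Rabs (gradV j z) + 1.
  have HM : 0 <= M by rewrite /M; have := Rabs_pos (g j z); lra.
  have HB : 0 <= B by rewrite /B; have := Rabs_pos (gradV j z); lra.
  exists (r0 / 2), (4 * (M + 1) + 2 * B / (r0 / 2)); split; first lra.
  move=> y Hy.
  have Hline : forall s, y j - r0 / 2 <= s <= y j + r0 / 2 ->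
      U (upd y j s) /\ Rabs (gradV j (upd y j s) - gradV j z) < 1 /\
      Rabs (g j (upd y j s) - g j z) < 1.
    move=> s Hs.
    have Hs0 : Rabs (s - z j) < r0 by have := Hy j; split_Rabs; lra.
    have Hb : box z r0 (upd y j s) by apply: box_upd => //; apply: box_shrink Hy; lra.
    have [U1 G1] := H1 _ (box_shrink (Rmin_l r1 r2) Hb).
    by have [_ G2] := H2 _ (box_shrink (Rmin_r r1 r2) Hb).
  have [Uy [Gy _]] := Hline (y j) ltac:(lra); rewrite upd_same in Uy Gy.
  split => //.
  have := @glaeser_inequality (fun s => V (upd y j s)) (fun s => gradV j (upd y j s))
    (fun s => g j (upd y j s)) (y j) (r0 / 2) M B ltac:(lra) HM HB.
  rewrite upd_same; apply.
  - by move=> s Hs; apply: partial_upd; apply: hgrad; case: (Hline s Hs).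
  - by move=> s Hs; apply: partial_upd; apply: Hg1; case: (Hline s Hs).
  - move=> s Hs; have [_ [_ A]] := Hline s Hs.
    by rewrite /M; have := Rabs_triang_inv (g j (upd y j s)) (g j z); lra.
  - by move=> s Hs; apply: hA1a; case: (Hline s Hs).
  - by rewrite /B; have := Rabs_triang_inv (gradV j y) (gradV j z); lra.
Qed.

Lemma gradV_sq_le_V_near z : U z ->
  exists r C, 0 < r /\ forall y, box z r y -> U y /\ rsum (fun j => gradV j y ^ 2) <= C * V y.
Proof.
  move=> Uz.
  have [r [C [Hr HP]]] := @ex_radius_bound_all_coords n
    (fun j r C => forall y, box z r y -> U y /\ gradV j y ^ 2 <= C * V y)
    ltac:(move=> j r r' C C' Hr' HC HP y Hy;
          have [Uy A] := HP y (box_shrink (proj2 Hr') Hy);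
          split => //; have := hA1a Uy; nra)
    (fun j => gradV_coord_sq_le_V_near j Uz).
  have [r0 [Hr0 HU0]] := open_has_box z hU Uz.
  exists (Rmin r r0), (INR n * C); split; first by apply: Rmin_glb_lt.
  move=> y Hy; split; first by apply: HU0; apply: box_shrink Hy; apply: Rmin_r.
  have := @rsum_const_le n (fun j => gradV j y ^ 2) (C * V y)
    (fun j => proj2 (HP j y (box_shrink (Rmin_l r r0) Hy))).
  lra.
Qed.

Lemma zero_set_invariant_flow : invariant_set U flow Z.
Proof.
  move=> I x HI I0 Hs [U0 V0] t It.
  have [Ut _] := Hs t It; split => //.
  set W := fun s => V (x s).
  have Wpos : forall s, I s -> 0 <= W s by move=> s Is; apply: hA1a; case: (Hs s Is).
  case: (Rle_dec 0 t) => Ht.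
    by have := @V_nonincreasing_flow I x 0 t HI Hs I0 It Ht; have := Wpos t It; rewrite /W V0; lra.
  have Isub : forall s, t <= s <= 0 -> I s by move=> s Hs'; apply: (HI t s 0) => //; lra.
  apply: (@zero_propagates_backward W t) => //; first lra.
  - by move=> s Hs'; apply: Wpos; apply: Isub.
  - move=> s Hs'.
    have [d [Hd Hl]] := deriv_in_locally_lipschitz (@V_deriv_flow I x _ Hs (Isub s Hs')).
    exists d, (Rabs (- rsum (fun j => gradV j (x s) ^ 2)) + 1); split => //; split.
      by have := Rabs_pos (- rsum (fun j => gradV j (x s) ^ 2)); lra.
    by move=> u Hu; apply: Hl; apply: Isub.
  - move=> T HT WT.
    have IT : I T by apply: Isub; lra.
    have [UT HdT] := Hs T IT.
    have [rho [C [Hrho HG]]] := gradV_sq_le_V_near UT.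
    have [d [Hd Hbx]] := @deriv_in_near_box n I x _ T rho Hrho HdT.
    set T' := Rmax t (T - d / 2).
    have HT'1 : t <= T' by apply: Rmax_l.
    have HT'2 : T' < T by rewrite /T'; apply: Rmax_lub_lt; lra.
    pose J := fun s => T' <= s <= T.
    have JI : forall s, J s -> I s by move=> s [A B]; apply: Isub; lra.
    exists T'; split => //.
    apply: (@deriv_in_gronwall_zero J W (fun s => rsum (fun j => gradV j (x s) ^ 2)) C T' T) => //.
    + by move=> a b e Ha He ? ?; rewrite /J in Ha He *; lra.
    + by rewrite /J; lra.
    + by rewrite /J; lra.
    + by lra.
    + move=> s Js; apply: deriv_in_restrict (@V_deriv_flow I x _ Hs (JI s Js)).
      by exists 1; split; [lra | move=> u Ju _; apply: JI].
    + move=> s [A B]; apply: (proj2 (HG _ _)); apply: Hbx; first by apply: JI.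
      have : T - d / 2 <= T' by apply: Rmax_r.
      split_Rabs; lra.
    + by move=> s Js; apply: Wpos; apply: JI.
Qed.

Lemma flow_traj_in_K x : sol U flow halfline x -> K (x 0) -> forall t, halfline t -> K (x t).
Proof.
  move=> Hs K0; apply: (@K_forward_invariant halfline x halfline_interval) => //.
  by rewrite /halfline; lra.
Qed.

Lemma flow_traj_bounded x f : sol U flow halfline x -> K (x 0) -> cont_on U f ->
  exists B, forall t, halfline t -> Rabs (f (x t)) <= B.
Proof.
  move=> Hs K0 Hf.
  have [B HB] := @cont_on_compact_bounded n U K f hU hA2 (fun y Ky => proj1 Ky) Hf.
  by exists B => t It; apply: HB; apply: flow_traj_in_K.
Qed.

Lemma flow_traj_lipschitz x f : sol U flow halfline x -> K (x 0) -> smooth U f ->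
  exists L, forall a b, halfline a -> halfline b -> Rabs (f (x b) - f (x a)) <= L * Rabs (b - a).
Proof.
  move=> Hs K0 Hf.
  have [g [Hg1 Hg2]] := smooth_grad hU Hf.
  set Df := fun y => rsum (fun j => g j y * flow y j).
  have HDf : smooth U Df.
    by apply: smooth_rsum => j; apply: smooth_mult; [apply: Hg2 | exact: flow_smooth].
  have [B HB] := flow_traj_bounded Hs K0 (smooth_cont HDf).
  exists B => a b Ia Ib.
  apply: (@deriv_in_bounded_lipschitz halfline (fun s => f (x s)) (fun s => Df (x s)) a b B
    halfline_interval Ia Ib) => // t It.
  exact: (@sol_chain_rule n U _ f g halfline x t hU Hg1 (fun j => smooth_cont (Hg2 j)) Hs It).
Qed.

(* Barbalat's lemma applied to V(x(t)), which converges, with derivative -|grad V(x(t))|^2. *)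
Lemma gradV_tends0 x : sol U flow halfline x -> K (x 0) ->
  forall j, tends0 (fun t => gradV j (x t)).
Proof.
  move=> Hs K0.
  have [l Hl] := @nonincreasing_bounded_tends (fun t => V (x t)) 0
    (fun a b Ia Hab => @V_nonincreasing_flow halfline x a b halfline_interval Hs Ia
       ltac:(rewrite /halfline in Ia *; lra) Hab)
    (fun t It => hA1a (proj1 (flow_traj_in_K Hs K0 It))).
  set G := fun y => rsum (fun j => gradV j y ^ 2).
  have HG : smooth U (fun y => (-1) * G y).
    apply: smooth_mult; first exact: smooth_const.
    apply: smooth_rsum => j; apply: (@smooth_ext n U (fun y => gradV j y * gradV j y)) => //.
      by move=> y _; ring.
    by apply: smooth_mult; apply: gradV_smooth.
  have [L HL] := flow_traj_lipschitz Hs K0 HG.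
  have HGt : tends0 (fun t => (-1) * G (x t)).
    apply: (@barbalat (fun t => V (x t) - l) _ (fun _ => 0) L) => //.
    - move=> t It; rewrite Rplus_0_r (_ : -1 * G (x t) = - G (x t) + 0); last ring.
      exact: deriv_in_plus (@V_deriv_flow halfline x t Hs It) (deriv_in_const _ _ _).
    - by move=> eps He; exists 0 => t _; rewrite Rabs_R0.
  move=> j; apply: tends0_sq; apply: tends0_le HGt => t It.
  have Hj : gradV j (x t) ^ 2 <= G (x t).
    by apply: (rsum_mem (fun k => gradV k (x t) ^ 2)) => k; apply: pow2_ge_0.
  rewrite Rabs_mult Rabs_Ropp Rabs_R1 Rmult_1_l !Rabs_pos_eq //; try exact: pow2_ge_0.
  exact: Rle_trans (pow2_ge_0 _) Hj.
Qed.

(* Along the flow, the derivative of h0(x(t)) is (X h0)(x(t)) minus grad h0 . grad V at x(t);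
   the second term tends to 0, and X h0 is Lipschitz along the bounded trajectory, so Barbalat's
   lemma passes the limit 0 from h0 to X h0. *)
Lemma lie_iter_tends0 x : sol U flow halfline x -> K (x 0) ->
  forall k g h, lie_iter U X k g h -> smooth U g -> tends0 (fun t => g (x t)) ->
  tends0 (fun t => h (x t)).
Proof.
  move=> Hs K0 k g h Hl.
  elim: Hl => [g0 _ H0 | k0 g0 h0 p Hl IH Hp Hg0 Ht0] //.
  have Hh := IH Hg0 Ht0.
  have Hh0s : smooth U h0 by apply: (lie_iter_smooth hU hX Hg0 Hl).
  have Hps : forall j, smooth U (p j).
    by move=> j; apply: (@smooth_partial n U h0 j (p j) hU Hh0s); apply: Hp.
  set h' := fun y => rsum (fun j => X y j * p j y).
  have Hh's : smooth U h'.
    by apply: smooth_rsum => j; apply: smooth_mult; [apply: hX | apply: Hps].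
  have [L HL] := flow_traj_lipschitz Hs K0 Hh's.
  pose e := fun t => (-1) * rsum (fun j => p j (x t) * gradV j (x t)).
  have He : tends0 e.
    apply: (@tends0_bnd_mult (fun _ => -1) _ 1).
      by move=> t _; rewrite Rabs_Ropp Rabs_R1; lra.
    apply: tends0_rsum => j.
    have [B HB] := flow_traj_bounded Hs K0 (smooth_cont (Hps j)).
    exact: (@tends0_bnd_mult (fun t => p j (x t)) _ B HB (gradV_tends0 Hs K0 j)).
  apply: (@barbalat (fun t => h0 (x t)) (fun t => h' (x t)) e L) => // t It.
  suff -> : h' (x t) + e t = rsum (fun j => p j (x t) * flow (x t) j).
    exact: (@sol_chain_rule n U _ h0 p halfline x t hU Hp (fun j => smooth_cont (Hps j)) Hs It).
  rewrite /h' /e /flow -rsum_scal -rsum_plus; apply: rsum_ext => j; ring.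
Qed.

Lemma cluster_point_in_S x (tm : nat -> R) y : sol U flow halfline x -> K (x 0) ->
  (forall m, INR m <= tm m) -> K y ->
  (forall d, 0 < d -> forall N, exists m, (N <= m)%nat /\ box y d (x (tm m))) ->
  Sset U X V y.
Proof.
  move=> Hs K0 Htm Ky Hcl.
  split; first by case: Ky.
  move=> i g Hg k h Hl.
  have Eg : forall z, U z -> gradV i z = g z.
    by move=> z Uz; apply: (@partial_unique n V i z _ _ (hgrad i Uz)); apply: Hg.
  have Hgs : smooth U g by apply: (@smooth_ext n U (gradV i) g hU Eg); exact: gradV_smooth.
  have Hgt : tends0 (fun t => g (x t)).
    apply: (@tends0_ext (fun t => gradV i (x t))); last exact: gradV_tends0.
    by move=> t It; apply: Eg; case: (flow_traj_in_K Hs K0 It).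
  have Hht := lie_iter_tends0 Hs K0 Hl Hgs Hgt.
  have Hhs : smooth U h by apply: (lie_iter_smooth hU hX Hgs Hl).
  suff A : Rabs (h y) <= 0 by have := Rabs_pos (h y); split_Rabs; lra.
  apply: le_epsilon => eta Heta; rewrite Rplus_0_l.
  have [rho [Hrho Hb]] := @cont_on_box n U h y hU (smooth_cont Hhs) (proj1 Ky) (eta / 2) ltac:(lra).
  have [T HT] := Hht (eta / 2) ltac:(lra).
  have [N HN] := INR_unbounded T.
  have [m [Hm Hbm]] := Hcl rho Hrho N.
  have HNm : INR N <= INR m by apply: le_INR; apply/leP.
  have Hmt : T <= tm m by have := Htm m; lra.
  have A1 := HT (tm m) Hmt.
  have [_ A2] := Hb _ Hbm.
  have := Rabs_triang (h (x (tm m))) (- (h (x (tm m)) - h y)); rewrite Rabs_Ropp.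
  rewrite (_ : h (x (tm m)) + - (h (x (tm m)) - h y) = h y); last ring.
  lra.
Qed.

(* If x stayed eps away from Z at arbitrarily late times t_m, a cluster point of x(t_m) in the
   compact set K would lie in S /\ K but not in Z, contradicting A3'. *)
Lemma flow_converges_to_zero_set x : sol U flow halfline x -> K (x 0) -> converges_to_set x Z.
Proof.
  move=> Hs K0 eps He; apply: NNPP => Hno.
  have Hfar : forall N : nat, exists t, INR N <= t /\ forall y, Z y -> ~ enorm (vsub (x t) y) < eps.
    move=> N; apply: NNPP => H1; apply: Hno; exists (INR N) => t Ht.
    apply: NNPP => H2; apply: H1; exists t; split => // y Zy Hy; apply: H2; by exists y.
  pose tm := fun N => proj1_sig (constructive_indefinite_description _ (Hfar N)).
  have Htm : forall N, INR N <= tm N /\ forall y, Z y -> ~ enorm (vsub (x (tm N)) y) < eps.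
    by move=> N; exact: (proj2_sig (constructive_indefinite_description _ (Hfar N))).
  have Ku : forall N, K (x (tm N)).
    move=> N; apply: flow_traj_in_K => //.
    by rewrite /halfline; have := pos_INR N; have := proj1 (Htm N); lra.
  have [y [Ky Hcl]] := @compact_cluster_point n K (fun N => x (tm N)) hA2 Ku.
  have Vy : V y = 0.
    by apply: hA3 => //; apply: (@cluster_point_in_S x tm) => // N; case: (Htm N).
  have HN := pos_INR n.
  have [m [_ Hbm]] := Hcl (eps / (INR n + 1)) ltac:(apply: Rdiv_lt_0_compat; lra) 0%nat.
  apply: (proj2 (Htm m) y); first by split => //; case: Ky.
  exact: enorm_lt_of_box.
Qed.

End GradientPerturbedFlow.

Theorem theorem2 (n : nat) (U : Rn n -> Prop) (X : Rn n -> Rn n) (V : Rn n -> R)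
  (gradV : 'I_n -> Rn n -> R) (c : R)
  (hU : is_open U)
  (hX : forall i, smooth U (fun x => X x i))
  (hV : smooth U V)
  (hgrad : forall i x, U x -> partial V i x (gradV i x))
  (* A1 *)
  (hA1a : forall x, U x -> 0 <= V x)
  (hA1b : exists x, U x /\ V x = 0)
  (hA1c : forall x, U x -> rsum (fun i => gradV i x * X x i) = 0)
  (* A2 *)
  (hc : 0 < c)
  (hA2 : is_compact (fun x => U x /\ 0 <= V x <= c))
  (* A3' *)
  (hA3 : forall x, Sset U X V x -> (U x /\ 0 <= V x <= c) -> V x = 0) :
  let K := fun x => U x /\ 0 <= V x <= c in
  let Z := fun x => U x /\ V x = 0 in
  let F := fun x i => X x i - gradV i x in
  (forall x0, K x0 -> exists x, sol U F (fun t => 0 <= t) x /\ x 0 = x0) /\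
  (forall (I : R -> Prop) (x : R -> Rn n),
      is_interval I -> I 0 -> (forall t, I t -> 0 <= t) ->
      sol U F I x -> K (x 0) -> forall t, I t -> K (x t)) /\
  (forall x, sol U F (fun t => 0 <= t) x -> K (x 0) -> converges_to_set x Z) /\
  invariant_set U X Z /\ invariant_set U F Z.
Proof.
  move=> K Z F; split; [|split; [|split; [|split]]].
  - exact: flow_global_existence hV hgrad hA1a hA1c hA2.
  - exact: K_forward_invariant hV hgrad hA1a hA1c.
  - exact: flow_converges_to_zero_set hX hV hgrad hA1a hA1c hA2 hA3.
  - exact: zero_set_invariant_X hV hgrad hA1c.
  - exact: zero_set_invariant_flow hV hgrad hA1a hA1c.
Qed.
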